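(* Let $\mathfrak{G}\subset\mathbb{R}^3$ be the Gaussian bell-shaped surface $z=f(x,y)=\frac32e^{-(x^2+y^2)}$ with the Riemannian metric $h$ induced from $\mathbb{R}^3$, let $\bar g>0$, and let $\mathbf{G}^T=-\bar g\,\mathrm{grad}_hf=-\frac{\bar g}{q+1}\big(f_x\frac{\partial}{\partial x}+f_y\frac{\partial}{\partial y}\big)$, $q=f_x^2+f_y^2$, be the gravitational wind on $\mathfrak{G}$. Let $\tilde\eta\in[0,1]$ and let $\tilde F_{\tilde\eta}$ be the slippery-cross-slope metric on $\mathfrak{G}$, i.e. at each $(x,y)\in T\mathfrak{G}\setminus\{0\}$ the positive solution $\tilde F$ of $F(x,y-\tilde F\,\mathbf{G}^T)=\tilde F$ with $F=\frac{\alpha^2}{\alpha+\tilde\eta\bar g\beta}$, $\alpha=\sqrt{h(y,y)}$, $\beta=-\frac1{\bar g}h(y,\mathbf{G}^T)$. Then the indicatrix of $\tilde F_{\tilde\eta}$ is strongly convex on the entire surface $\mathfrak{G}$ if and only if $\bar g<\delta_2(\tilde\eta)$, where $\delta_2(\tilde\eta)=\frac{\sqrt{2e+9}}{3(1-\tilde\eta)}$ if $\tilde\eta\in[0,\frac13]$ and $\delta_2(\tilde\eta)=\frac{\sqrt{2e+9}}{6\tilde\eta}$ if $\tilde\eta\in(\frac13,1]$.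
   Context: The slippery-cross-slope metric equivalently satisfies $\tilde F\sqrt{\alpha^2+2\bar g\beta\tilde F+\|\mathbf{G}^T\|_h^2\tilde F^2}=\alpha^2+(2-\tilde\eta)\bar g\beta\tilde F+(1-\tilde\eta)\|\mathbf{G}^T\|_h^2\tilde F^2$. *)

From Stdlib Require Import Reals.
From Coquelicot Require Import Coquelicot.
Open Scope R_scope.

(* Points of the surface are given by their chart coordinates p = (x,y);
   tangent vectors at p are given by their components w = (u,v) in the
   coordinate basis (d/dx, d/dy). *)

Definition fG (x y : R) : R := 3 / 2 * exp (- (x ^ 2 + y ^ 2)).

Definition fx (p : R * R) : R := Derive (fun s => fG s (snd p)) (fst p).
Definition fy (p : R * R) : R := Derive (fun s => fG (fst p) s) (snd p).

Definition qG (p : R * R) : R := fx p ^ 2 + fy p ^ 2.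

(* Riemannian metric h induced from R^3 by (x,y) |-> (x,y,f(x,y)):
   h = (1+f_x^2)dx^2 + 2 f_x f_y dx dy + (1+f_y^2) dy^2 *)
Definition hmet (p w1 w2 : R * R) : R :=
  fst w1 * fst w2 + snd w1 * snd w2
  + (fx p * fst w1 + fy p * snd w1) * (fx p * fst w2 + fy p * snd w2).

Definition Gwind (gbar : R) (p : R * R) : R * R :=
  (- (gbar / (qG p + 1)) * fx p, - (gbar / (qG p + 1)) * fy p).

Definition alpha (p w : R * R) : R := sqrt (hmet p w w).
Definition beta (gbar : R) (p w : R * R) : R := - (1 / gbar) * hmet p w (Gwind gbar p).

Definition Fcs (gbar eta : R) (p w : R * R) : R :=
  alpha p w ^ 2 / (alpha p w + eta * gbar * beta gbar p w).

Definition shiftw (gbar : R) (p w : R * R) (t : R) : R * R :=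
  (fst w - t * fst (Gwind gbar p), snd w - t * snd (Gwind gbar p)).

Definition is_slippery_cross_slope (gbar eta : R) (Ft : R * R -> R * R -> R) : Prop :=
  forall p w : R * R,
    (w = (0, 0) -> Ft p w = 0) /\
    (w <> (0, 0) ->
       0 < Ft p w /\ Fcs gbar eta p (shiftw gbar p w (Ft p w)) = Ft p w /\
       (forall t, 0 < t -> Fcs gbar eta p (shiftw gbar p w t) = t -> t = Ft p w)).

(* Strong convexity of the indicatrix {w <> 0 | N w = 1} of N : T_pM -> R:
   at every point w of the indicatrix, N is differentiable with nonzero
   gradient (a,b) (so the indicatrix is a regular curve there), and the
   second fundamental form of the indicatrix is positive, i.e. the second
   derivative of N along the tangent direction (-b,a) is > 0
   (positive curvature with respect to the inner normal). *)
Definition strongly_convex_indicatrix (N : R * R -> R) : Prop :=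
  forall w : R * R, w <> (0, 0) -> N w = 1 ->
    exists a b : R, (a, b) <> (0, 0) /\
      differentiable_pt_lim (fun u v => N (u, v)) (fst w) (snd w) a b /\
      (let line := fun t => N (fst w - t * b, snd w + t * a) in
       locally 0 (fun t => ex_derive line t) /\
       exists k : R, 0 < k /\ is_derive (Derive line) 0 k).

Definition delta2 (eta : R) : R :=
  if Rle_dec eta (1 / 3)
  then sqrt (2 * exp 1 + 9) / (3 * (1 - eta))
  else sqrt (2 * exp 1 + 9) / (6 * eta).

From Stdlib Require Import Reals Lra Psatz ClassicalEpsilon FunctionalExtensionality.
From Coquelicot Require Import Coquelicot.
Open Scope R_scope.

(* On each tangent plane, F = alpha^2 / (alpha + eta gbar beta) is a
   Matsumoto-type norm: it is strongly convex iff |eta gbar beta| < alpha / 2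
   everywhere, i.e. 4 eta^2 h(G,G) < 1, and F(-G) < 1 iff
   (1 - eta)^2 h(G,G) < 1.  Since h(G,G) = gbar^2 q / (q + 1) and
   q = f_x^2 + f_y^2 reaches its maximum 9 / (2e) on the circle
   x^2 + y^2 = 1/2, both conditions hold on the whole surface iff
   gbar < delta2(eta).

   When they hold, s |-> F(w - s G) - s decreases at a uniform rate, so
   Zermelo's equation has a unique positive solution, which is smooth in w by
   the implicit function theorem; its indicatrix is the indicatrix of F
   translated by G, hence strongly convex.  Conversely, if
   (1 - eta)^2 h(G,G) >= 1 somewhere, w = -G has no solution; otherwise some
   point of the x-axis has 4 eta^2 h(G,G) = 1 exactly, and there the
   indicatrix of the solution, symmetric under (u, v) |-> (u, -v), stays
   within O(T^4) of its vertical tangent line at its point on the u-axis, so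
   its curvature vanishes there. *)

(** * Real analysis *)

Lemma locally_Rabs (P : R -> Prop) x :
  locally x P <-> exists d : posreal, forall y, Rabs (y - x) < d -> P y.
Proof. split; intros [d hd]; exists d; exact hd. Qed.

Lemma continuity_pt_of_is_derive (f : R -> R) x l :
  is_derive f x l -> continuity_pt f x.
Proof.
  intros h. apply continuity_pt_filterlim.
  apply (ex_derive_continuous (K := R_AbsRing) (V := R_NormedModule)). now exists l.
Qed.

Lemma continuity_pt_affine a b t0 : continuity_pt (fun t => a - t * b) t0.
Proof. apply (continuity_pt_of_is_derive _ _ (- b)). auto_derive; auto. ring. Qed.

Lemma is_derive_shift (h : R -> R) t0 l :
  is_derive (fun s => h (t0 + s)) 0 l -> is_derive h t0 l.
Proof.
  intros H.
  assert (H' : is_derive (fun z => (fun s => h (t0 + s)) (z - t0)) t0 (scal 1 l)).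
  { apply (is_derive_comp (fun s => h (t0 + s)) (fun z => z - t0)).
    - replace (t0 - t0) with 0 by ring. exact H.
    - auto_derive; auto. }
  change (scal 1 l) with (1 * l) in H'. rewrite Rmult_1_l in H'.
  eapply is_derive_ext; [|exact H']. intros z. simpl. f_equal; ring.
Qed.

Lemma mean_value_abs_le (f df : R -> R) a b c0 eps :
  (forall z, Rabs (z - a) <= Rabs (b - a) -> is_derive f z (df z)) ->
  (forall z, Rabs (z - a) <= Rabs (b - a) -> Rabs (df z - c0) <= eps) ->
  Rabs (f b - f a - c0 * (b - a)) <= eps * Rabs (b - a).
Proof.
  intros hd hb.
  destruct (MVT_cor4 f df a (Rabs (b - a)) hd b (Rle_refl _)) as [c [e hc]].
  rewrite e. replace (df c * (b - a) - c0 * (b - a)) with ((df c - c0) * (b - a)) by ring.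
  rewrite Rabs_mult. apply Rmult_le_compat_r; [apply Rabs_pos | now apply hb].
Qed.

Lemma differentiable_pt_lim_of_partials (f d1 d2 : R -> R -> R) x y :
  locally_2d (fun u v => is_derive (fun z => f z v) u (d1 u v) /\
                         is_derive (fun z => f u z) v (d2 u v)) x y ->
  continuity_2d_pt d1 x y -> continuity_2d_pt d2 x y ->
  differentiable_pt_lim f x y (d1 x y) (d2 x y).
Proof.
  intros [d0 hd] c1 c2 eps.
  assert (he2 : 0 < eps / 2) by (destruct eps; simpl; lra).
  destruct (c1 (mkposreal _ he2)) as [e1 h1].
  destruct (c2 (mkposreal _ he2)) as [e2 h2].
  assert (hmin : 0 < Rmin d0 (Rmin e1 e2)).
  { destruct d0, e1, e2; simpl. repeat apply Rmin_pos; lra. }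
  exists (mkposreal _ hmin). simpl. intros u v hu hv.
  pose proof (Rmin_l d0 (Rmin e1 e2)). pose proof (Rmin_r d0 (Rmin e1 e2)).
  pose proof (Rmin_l e1 e2). pose proof (Rmin_r e1 e2).
  pose proof (cond_pos d0). pose proof (cond_pos e2).
  assert (A : Rabs (f u v - f x v - d1 x y * (u - x)) <= eps / 2 * Rabs (u - x)).
  { apply (mean_value_abs_le (fun z => f z v) (fun z => d1 z v)); intros z hz.
    - apply hd; lra.
    - apply Rlt_le, h1; lra. }
  assert (B : Rabs (f x v - f x y - d2 x y * (v - y)) <= eps / 2 * Rabs (v - y)).
  { apply (mean_value_abs_le (fun z => f x z) (fun z => d2 x z)); intros z hz.
    - apply hd; [rewrite Rminus_eq_0, Rabs_R0 |]; lra.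
    - apply Rlt_le, h2; [rewrite Rminus_eq_0, Rabs_R0 |]; lra. }
  replace (f u v - f x y - (d1 x y * (u - x) + d2 x y * (v - y))) with
    ((f u v - f x v - d1 x y * (u - x)) + (f x v - f x y - d2 x y * (v - y))) by ring.
  eapply Rle_trans; [apply Rabs_triang|].
  pose proof (Rmax_l (Rabs (u - x)) (Rabs (v - y))).
  pose proof (Rmax_r (Rabs (u - x)) (Rabs (v - y))).
  destruct eps as [eps heps]; simpl in *. nra.
Qed.

Lemma linear_remainder_le a c h ds e :
  0 < Rabs c -> 0 <= e <= Rabs c / 2 ->
  Rabs (a * h + c * ds) <= e * Rmax (Rabs h) (Rabs ds) ->
  Rabs (a * h + c * ds) <= e * (2 * (Rabs a + Rabs c) / Rabs c) * Rabs h.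
Proof.
  intros hc he hr.
  set (M := 2 * (Rabs a + Rabs c) / Rabs c).
  pose proof (Rabs_pos a). pose proof (Rabs_pos h). pose proof (Rabs_pos ds).
  assert (hmax : Rmax (Rabs h) (Rabs ds) <= Rabs h + Rabs ds).
  { apply Rmax_lub; lra. }
  assert (hcds : Rabs c * Rabs ds <= Rabs a * Rabs h + e * (Rabs h + Rabs ds)).
  { rewrite <- !Rabs_mult. replace (c * ds) with ((a * h + c * ds) - a * h) by ring.
    eapply Rle_trans; [apply Rabs_triang|]. rewrite Rabs_Ropp, Rabs_mult. nra. }
  assert (hds : Rabs ds <= M * Rabs h).
  { unfold M. apply (Rmult_le_reg_l (Rabs c)); [lra|].
    replace (Rabs c * (2 * (Rabs a + Rabs c) / Rabs c * Rabs h))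
      with (2 * (Rabs a + Rabs c) * Rabs h) by (field; lra).
    nra. }
  assert (hM : 2 <= M).
  { unfold M. apply (Rmult_le_reg_r (Rabs c)); [lra|]. field_simplify; lra. }
  assert (Rmax (Rabs h) (Rabs ds) <= M * Rabs h) by (apply Rmax_lub; nra).
  fold M. nra.
Qed.

Lemma implicit_remainder_small (Phi : R -> R -> R) (S : R -> R) t0 a c :
  differentiable_pt_lim Phi t0 (S t0) a c -> continuity_pt S t0 ->
  locally t0 (fun t => Phi t (S t) = 0) ->
  forall e : posreal, exists d : posreal, forall h, Rabs h < d ->
    Rabs (a * h + c * (S (t0 + h) - S t0))
    <= e * Rmax (Rabs h) (Rabs (S (t0 + h) - S t0)).
Proof.
  intros hd hS hloc e.
  destruct (proj1 (locally_Rabs _ _) hloc) as [d3 h3].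
  destruct (hd e) as [d1 h1].
  destruct (hS d1 (cond_pos d1)) as [d2 [hd2 h2]].
  assert (hdd : 0 < Rmin d1 (Rmin d2 d3)).
  { destruct d1, d3; simpl. repeat apply Rmin_pos; lra. }
  exists (mkposreal _ hdd). intros h hh. simpl in hh.
  pose proof (Rmin_l d1 (Rmin d2 d3)). pose proof (Rmin_r d1 (Rmin d2 d3)).
  pose proof (Rmin_l d2 d3). pose proof (Rmin_r d2 d3).
  assert (hds : Rabs (S (t0 + h) - S t0) < d1).
  { destruct (Req_dec h 0) as [->|hn].
    - rewrite Rplus_0_r, Rminus_eq_0, Rabs_R0. apply cond_pos.
    - apply (h2 (t0 + h)). split.
      + split; [exact I|]. intros e'. apply hn. lra.
      + simpl. unfold R_dist. replace (t0 + h - t0) with h by ring. lra. }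
  assert (E0 : Phi (t0 + h) (S (t0 + h)) = 0).
  { apply h3. replace (t0 + h - t0) with h by ring. lra. }
  assert (E1 : Phi t0 (S t0) = 0).
  { apply h3. rewrite Rminus_eq_0, Rabs_R0. apply cond_pos. }
  pose proof (h1 (t0 + h) (S (t0 + h)) ltac:(replace (t0 + h - t0) with h by ring; lra) hds)
    as K.
  rewrite E0, E1 in K. replace (t0 + h - t0) with h in K by ring.
  rewrite <- Rabs_Ropp. replace (- _) with (0 - 0 - (a * h + c * (S (t0 + h) - S t0))) by ring.
  exact K.
Qed.

Lemma is_derive_implicit (Phi : R -> R -> R) (S : R -> R) t0 s0 a c :
  S t0 = s0 -> differentiable_pt_lim Phi t0 s0 a c -> c <> 0 -> continuity_pt S t0 ->
  locally t0 (fun t => Phi t (S t) = 0) ->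
  is_derive S t0 (- a / c).
Proof.
  intros <- hd hc hS hloc.
  apply is_derive_Reals. intros eps heps.
  assert (hc' : 0 < Rabs c) by (apply Rabs_pos_lt; exact hc).
  set (M := 2 * (Rabs a + Rabs c) / Rabs c).
  assert (hM : 0 < M) by (unfold M; pose proof (Rabs_pos a); apply Rdiv_lt_0_compat; lra).
  set (e := Rmin (Rabs c / 2) (eps * Rabs c / (2 * M))).
  assert (he : 0 < e).
  { unfold e. apply Rmin_pos; [lra|]. apply Rdiv_lt_0_compat; nra. }
  pose proof (Rmin_l (Rabs c / 2) (eps * Rabs c / (2 * M))) as m1.
  pose proof (Rmin_r (Rabs c / 2) (eps * Rabs c / (2 * M))) as m2.
  fold e in m1, m2.
  destruct (implicit_remainder_small Phi S t0 a c hd hS hloc (mkposreal _ he)) as [d hsmall].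
  exists d. intros h hh0 hh.
  set (ds := S (t0 + h) - S t0).
  pose proof (linear_remainder_le a c h ds e hc' ltac:(lra) (hsmall h hh)) as K. fold M in K.
  assert (hpos : 0 < Rabs h) by (apply Rabs_pos_lt; exact hh0).
  assert (K' : Rabs (a * h + c * ds) <= eps / 2 * (Rabs c * Rabs h)).
  { eapply Rle_trans; [exact K|].
    replace (eps / 2 * (Rabs c * Rabs h)) with (eps * Rabs c / (2 * M) * M * Rabs h)
      by (field; lra).
    apply Rmult_le_compat_r; [lra|]. apply Rmult_le_compat_r; lra. }
  replace (ds / h - - a / c) with ((a * h + c * ds) / (c * h)) by (field; auto).
  unfold Rdiv. rewrite Rabs_mult, Rabs_inv, Rabs_mult.
  assert (hch : 0 < Rabs c * Rabs h) by nra.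
  apply (Rmult_lt_reg_r (Rabs c * Rabs h)); [exact hch|].
  rewrite Rmult_assoc, Rinv_l, Rmult_1_r by (apply Rgt_not_eq; exact hch). nra.
Qed.

Lemma continuity_2d_pt_comp (f A B : R -> R -> R) x y :
  continuity_2d_pt f (A x y) (B x y) -> continuity_2d_pt A x y -> continuity_2d_pt B x y ->
  continuity_2d_pt (fun u v => f (A u v) (B u v)) x y.
Proof.
  intros hf hA hB eps.
  destruct (hf eps) as [d hd].
  destruct (hA d) as [dA hdA]. destruct (hB d) as [dB hdB].
  assert (hm : 0 < Rmin dA dB) by (destruct dA, dB; simpl; apply Rmin_pos; lra).
  exists (mkposreal _ hm). intros u v hu hv. simpl in hu, hv.
  pose proof (Rmin_l dA dB). pose proof (Rmin_r dA dB).
  apply hd; [apply hdA | apply hdB]; lra.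
Qed.

Lemma continuity_pt_comp_2d (f : R -> R -> R) (a b : R -> R) t0 :
  continuity_2d_pt f (a t0) (b t0) -> continuity_pt a t0 -> continuity_pt b t0 ->
  continuity_pt (fun t => f (a t) (b t)) t0.
Proof.
  intros hf ha hb eps heps.
  destruct (hf (mkposreal _ heps)) as [d hd].
  destruct (ha d (cond_pos d)) as [da [hda ha']].
  destruct (hb d (cond_pos d)) as [db [hdb hb']].
  exists (Rmin da db). split; [apply Rmin_pos; lra|].
  intros x [_ hx]. simpl in hx |- *. unfold R_dist in *.
  pose proof (Rmin_l da db). pose proof (Rmin_r da db).
  destruct (Req_dec x t0) as [->|hn].
  { rewrite Rminus_eq_0, Rabs_R0. exact heps. }
  apply hd; [apply (ha' x) | apply (hb' x)];
    (split; [split; [exact I | auto] | simpl; unfold R_dist; lra]).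
Qed.

Lemma continuity_2d_pt_sqrt (g : R -> R -> R) x y :
  continuity_2d_pt g x y -> 0 <= g x y -> continuity_2d_pt (fun u v => sqrt (g u v)) x y.
Proof.
  intros h p. apply continuity_1d_2d_pt_comp; [now apply continuity_pt_sqrt | exact h].
Qed.

Lemma continuity_2d_pt_div (f g : R -> R -> R) x y :
  continuity_2d_pt f x y -> continuity_2d_pt g x y -> g x y <> 0 ->
  continuity_2d_pt (fun u v => f u v / g u v) x y.
Proof.
  intros. unfold Rdiv. apply continuity_2d_pt_mult; auto. now apply continuity_2d_pt_inv.
Qed.

Lemma continuity_2d_pt_pow (f : R -> R -> R) n x y :
  continuity_2d_pt f x y -> continuity_2d_pt (fun u v => f u v ^ n) x y.
Proof.
  intros h. induction n; simpl.
  - apply continuity_2d_pt_const.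
  - now apply continuity_2d_pt_mult.
Qed.

Ltac continuity_2d :=
  repeat match goal with
  | |- continuity_2d_pt (fun u v => _ + _) _ _ => apply continuity_2d_pt_plus
  | |- continuity_2d_pt (fun u v => _ - _) _ _ => apply continuity_2d_pt_minus
  | |- continuity_2d_pt (fun u v => _ * _) _ _ => apply continuity_2d_pt_mult
  | |- continuity_2d_pt (fun u v => - _) _ _ => apply continuity_2d_pt_opp
  | |- continuity_2d_pt (fun u v => _ / _) _ _ => apply continuity_2d_pt_div
  | |- continuity_2d_pt (fun u v => _ ^ _) _ _ => apply continuity_2d_pt_pow
  | |- continuity_2d_pt (fun u v => sqrt _) _ _ => apply continuity_2d_pt_sqrt
  | |- continuity_2d_pt (fun u v => u) _ _ => apply continuity_2d_pt_id1
  | |- continuity_2d_pt (fun u v => v) _ _ => apply continuity_2d_pt_id2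
  | |- continuity_2d_pt (fun u v => _) _ _ => apply continuity_2d_pt_const
  end.

Lemma nonzero_near w1 w2 : (w1, w2) <> (0, 0) -> exists d : posreal,
  forall a b, Rabs (a - w1) < d -> Rabs (b - w2) < d -> (a, b) <> (0, 0).
Proof.
  intros nz.
  destruct (Req_dec w1 0) as [e1|n1].
  - assert (n2 : w2 <> 0) by (intro e2; apply nz; subst; auto).
    assert (h : 0 < Rabs w2) by (apply Rabs_pos_lt; auto).
    exists (mkposreal _ h). simpl. intros a b _ hb e. injection e as -> ->.
    rewrite Rminus_0_l, Rabs_Ropp in hb. lra.
  - assert (h : 0 < Rabs w1) by (apply Rabs_pos_lt; auto).
    exists (mkposreal _ h). simpl. intros a b ha _ e. injection e as -> ->.
    rewrite Rminus_0_l, Rabs_Ropp in ha. lra.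
Qed.

Lemma nonzero_near_line w1 w2 d1 d2 : (w1, w2) <> (0, 0) -> exists d : posreal,
  forall t, Rabs t < d -> (w1 + t * d1, w2 + t * d2) <> (0, 0).
Proof.
  intros nz. destruct (nonzero_near w1 w2 nz) as [d hd].
  pose proof (Rabs_pos d1). pose proof (Rabs_pos d2).
  assert (hq : 0 < d / (Rabs d1 + Rabs d2 + 1)).
  { apply Rdiv_lt_0_compat; [apply cond_pos | lra]. }
  exists (mkposreal _ hq). intros t ht. simpl in ht. pose proof (Rabs_pos t).
  assert (Rabs t * (Rabs d1 + Rabs d2 + 1) < d).
  { apply (Rmult_lt_compat_r (Rabs d1 + Rabs d2 + 1)) in ht; [|lra].
    field_simplify in ht; lra. }
  apply hd; [replace (w1 + t * d1 - w1) with (t * d1) by ring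
            | replace (w2 + t * d2 - w2) with (t * d2) by ring];
    rewrite Rabs_mult; nra.
Qed.

Lemma is_derive_even_0 (L : R -> R) l :
  (forall t, L (- t) = L t) -> is_derive L 0 l -> l = 0.
Proof.
  intros ev hl.
  assert (hl' : is_derive (fun t => L (- t)) 0 (scal (-1) l)).
  { apply (is_derive_comp L (fun t => - t)).
    - rewrite Ropp_0. exact hl.
    - auto_derive; auto. }
  assert (hl'' : is_derive L 0 (scal (-1) l)).
  { eapply is_derive_ext; [|exact hl']. exact ev. }
  pose proof (is_derive_unique _ _ _ hl) as u1. pose proof (is_derive_unique _ _ _ hl'') as u2.
  change (scal (-1) l) with ((-1) * l) in u2. lra.
Qed.

Lemma second_order_growth (L : R -> R) k :
  locally 0 (fun t => ex_derive L t) -> Derive L 0 = 0 -> 0 < k ->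
  is_derive (Derive L) 0 k ->
  exists t0, 0 < t0 /\ forall t, 0 < t < t0 -> L 0 + k * t ^ 2 / 4 <= L t.
Proof.
  intros hloc hL0 hk hD.
  destruct (proj1 (locally_Rabs _ _) hloc) as [rho hrho].
  apply is_derive_Reals in hD.
  destruct (hD (k / 2) ltac:(lra)) as [dl hdl].
  exists (Rmin dl rho). split; [apply Rmin_pos; apply cond_pos|].
  intros t [t1 t2].
  pose proof (Rmin_l dl rho). pose proof (Rmin_r dl rho).
  assert (der : forall s, 0 <= s <= t ->
            is_derive (fun s => L s - k * s ^ 2 / 4) s (Derive L s - k * s / 2)).
  { intros s hs.
    assert (ex_derive L s) by (apply hrho; rewrite Rminus_0_r, Rabs_pos_eq; lra).
    apply (is_derive_minus L (fun s => k * s ^ 2 / 4)).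
    - now apply Derive_correct.
    - auto_derive; auto. field. }
  assert (slope : forall c, 0 <= c <= t -> 0 <= Derive L c - k * c / 2).
  { intros c hc. destruct (Req_dec c 0) as [->|cn]; [rewrite hL0; lra|].
    specialize (hdl c cn ltac:(rewrite Rabs_pos_eq; lra)).
    rewrite Rplus_0_l, hL0, Rminus_0_r in hdl.
    apply Rabs_lt_between in hdl.
    assert (hc' : k / 2 * c < Derive L c / c * c) by (apply Rmult_lt_compat_r; lra).
    field_simplify in hc'; lra. }
  destruct (MVT_gen (fun s => L s - k * s ^ 2 / 4) 0 t (fun s => Derive L s - k * s / 2))
    as [c [hc e]].
  - intros s hs. rewrite Rmin_left, Rmax_right in hs by lra. apply der. lra.
  - intros s hs. rewrite Rmin_left, Rmax_right in hs by lra.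
    exact (continuity_pt_of_is_derive _ _ _ (der s hs)).
  - rewrite Rmin_left, Rmax_right in hc by lra.
    pose proof (slope c hc).
    assert (0 <= (Derive L c - k * c / 2) * (t - 0)) by (apply Rmult_le_pos; lra).
    replace (0 ^ 2) with 0 in e by ring. lra.
Qed.

Lemma quartic_bound_contradicts_growth (L : R -> R) k C :
  locally 0 (fun t => ex_derive L t) -> Derive L 0 = 0 -> 0 < k ->
  is_derive (Derive L) 0 k ->
  ~ locally 0 (fun t => L t <= L 0 + C * t ^ 4).
Proof.
  intros hloc hL0 hk hD hquart.
  destruct (second_order_growth L k hloc hL0 hk hD) as [t0 [t0p G]].
  destruct (proj1 (locally_Rabs _ _) hquart) as [d hd].
  pose proof (Rabs_pos C). pose proof (cond_pos d).
  set (m := k / (8 * (Rabs C + 1))).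
  assert (mp : 0 < m) by (apply Rdiv_lt_0_compat; lra).
  set (t := Rmin (Rmin (t0 / 2) (d / 2)) (Rmin 1 m)).
  assert (tp : 0 < t) by (unfold t; repeat apply Rmin_pos; lra).
  assert (tb : t <= t0 / 2 /\ t <= d / 2 /\ t <= 1 /\ t <= m).
  { unfold t. pose proof (Rmin_l (Rmin (t0 / 2) (d / 2)) (Rmin 1 m)).
    pose proof (Rmin_r (Rmin (t0 / 2) (d / 2)) (Rmin 1 m)).
    pose proof (Rmin_l (t0 / 2) (d / 2)). pose proof (Rmin_r (t0 / 2) (d / 2)).
    pose proof (Rmin_l 1 m). pose proof (Rmin_r 1 m). lra. }
  pose proof (G t ltac:(lra)) as lower.
  pose proof (hd t ltac:(rewrite Rminus_0_r, Rabs_pos_eq; lra)) as upper.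
  assert (kt : k <= 4 * C * t ^ 2).
  { assert (0 < t ^ 2) by (apply pow_lt; lra).
    apply (Rmult_le_reg_r (t ^ 2)); [lra|]. nra. }
  assert (Ct : 8 * (Rabs C + 1) * t <= k).
  { replace k with (8 * (Rabs C + 1) * m) by (unfold m; field; lra).
    apply Rmult_le_compat_l; lra. }
  assert (C * t ^ 2 <= Rabs C * t).
  { pose proof (Rle_abs C). assert (0 <= (Rabs C - C) * t ^ 2) by (apply Rmult_le_pos; nra).
    assert (0 <= Rabs C * t * (1 - t)) by (apply Rmult_le_pos; nra). nra. }
  nra.
Qed.

(** * The cross-slope norm on a tangent plane *)

Lemma concave_quadratic_ge (e g z : R) :
  0 <= e <= 1 -> 0 <= g -> 2 * e * g < 1 -> g * (1 - e) < 1 -> - g <= z <= g ->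
  (1 - g * (1 - e)) / 4 <= 1 + z * (1 - 2 * e) + z * z * (e * e - 2 * e) + e * g * g.
Proof.
  intros he hg hk hw hz.
  assert (h1 : 0 <= (e * e - 2 * e) * (z * z - g * g)).
  { replace ((e * e - 2 * e) * (z * z - g * g)) with ((2 * e - e * e) * (g * g - z * z))
      by ring.
    apply Rmult_le_pos; nra. }
  destruct (Req_dec g 0) as [->|gn]; [assert (z = 0) by lra; subst; lra|].
  (* the chord of the concave quadratic between z = -g and z = g *)
  set (L := fun z => 1 + z * (1 - 2 * e) + e * e * g * g - e * g * g).
  set (m := (1 - g * (1 - e)) / 4).
  assert (0 <= e * g) by (apply Rmult_le_pos; lra).
  assert (La : 0 <= L (- g) - m).
  { replace (L (- g) - m) with ((1 - g * (1 - e)) * (3 / 4 + e * g))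
      by (unfold L, m; field).
    apply Rmult_le_pos; lra. }
  assert (Lb : 0 <= L g - m).
  { replace (L g - m) with ((1 - e * g) * (1 - e * g + g) - m) by (unfold L; field).
    unfold m. assert (0 <= g * (1 - e)) by (apply Rmult_le_pos; lra). nra. }
  assert (id : 2 * g * (L z - m) = (g - z) * (L (- g) - m) + (z + g) * (L g - m))
    by (unfold L; field).
  assert (0 <= (g - z) * (L (- g) - m)) by (apply Rmult_le_pos; lra).
  assert (0 <= (z + g) * (L g - m)) by (apply Rmult_le_pos; lra).
  assert (0 <= L z - m) by nra.
  unfold L, m in *. nra.
Qed.

Lemma mul_sqrt_lt1 c G : 0 <= c -> 0 <= G -> c ^ 2 * G < 1 -> c * sqrt G < 1.
Proof.
  intros hc hG h. pose proof (sqrt_pos G). pose proof (sqrt_sqrt G hG).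
  assert ((c * sqrt G) * (c * sqrt G) < 1) by (simpl in h; nra).
  nra.
Qed.

(* At a fixed point of the surface: (slope_x, slope_y) = (f_x, f_y),
   (wind_x, wind_y) = G^T and slip = eta. *)
Record wind_frame := WindFrame
  { slope_x : R; slope_y : R; wind_x : R; wind_y : R; slip : R }.

Section Frame.
Variable fr : wind_frame.

Definition hdot u1 u2 v1 v2 :=
  u1 * v1 + u2 * v2
  + (slope_x fr * u1 + slope_y fr * u2) * (slope_x fr * v1 + slope_y fr * v2).
Definition hsq u1 u2 := hdot u1 u2 u1 u2.
Definition hwind u1 u2 := hdot u1 u2 (wind_x fr) (wind_y fr).
Definition wind_sq := hsq (wind_x fr) (wind_y fr).

(* sqrt (hsq u) - slip * hwind u  is  alpha + eta gbar beta. *)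
Definition cross_slope u1 u2 :=
  hsq u1 u2 / (sqrt (hsq u1 u2) - slip fr * hwind u1 u2).

Lemma hsq_ge_sum_sq u1 u2 : u1 ^ 2 + u2 ^ 2 <= hsq u1 u2.
Proof.
  unfold hsq, hdot. pose proof (pow2_ge_0 (slope_x fr * u1 + slope_y fr * u2)).
  simpl in *. lra.
Qed.

Lemma hsq_ge0 u1 u2 : 0 <= hsq u1 u2.
Proof. pose proof (hsq_ge_sum_sq u1 u2). nra. Qed.

Lemma hsq_gt0 u1 u2 : (u1, u2) <> (0, 0) -> 0 < hsq u1 u2.
Proof.
  intros nz. pose proof (hsq_ge_sum_sq u1 u2).
  destruct (Req_dec u1 0) as [->|h1]; destruct (Req_dec u2 0) as [->|h2];
    [now contradict nz | nra | nra | nra].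
Qed.

Lemma wind_sq_ge0 : 0 <= wind_sq.
Proof. apply hsq_ge0. Qed.

Lemma hwind_sq_le u1 u2 : hwind u1 u2 ^ 2 <= hsq u1 u2 * wind_sq.
Proof.
  assert (E : hsq u1 u2 * wind_sq - hwind u1 u2 ^ 2 =
    (1 + slope_x fr ^ 2 + slope_y fr ^ 2) * (u1 * wind_y fr - u2 * wind_x fr) ^ 2)
    by (unfold hsq, wind_sq, hsq, hwind, hdot; ring).
  pose proof (pow2_ge_0 (slope_x fr)). pose proof (pow2_ge_0 (slope_y fr)).
  pose proof (pow2_ge_0 (u1 * wind_y fr - u2 * wind_x fr)). nra.
Qed.

Lemma slip_hwind_sq_le u1 u2 :
  (slip fr * hwind u1 u2) ^ 2 <= slip fr ^ 2 * wind_sq * hsq u1 u2.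
Proof.
  rewrite Rpow_mult_distr.
  replace (slip fr ^ 2 * wind_sq * hsq u1 u2) with (slip fr ^ 2 * (hsq u1 u2 * wind_sq)) by ring.
  apply Rmult_le_compat_l; [apply pow2_ge_0 | apply hwind_sq_le].
Qed.

Lemma hwind_abs_le u1 u2 : Rabs (hwind u1 u2) <= sqrt (hsq u1 u2) * sqrt wind_sq.
Proof.
  rewrite <- sqrt_mult by (apply hsq_ge0 || apply wind_sq_ge0).
  rewrite <- sqrt_Rsqr_abs. apply sqrt_le_1_alt.
  rewrite Rsqr_pow2. apply hwind_sq_le.
Qed.

Lemma hwind_ratio_bound u1 u2 : (u1, u2) <> (0, 0) ->
  - sqrt wind_sq <= hwind u1 u2 / sqrt (hsq u1 u2) <= sqrt wind_sq.
Proof.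
  intros nz. pose proof (sqrt_lt_R0 _ (hsq_gt0 _ _ nz)).
  apply Rabs_le_between. unfold Rdiv.
  rewrite Rabs_mult, Rabs_inv, (Rabs_pos_eq (sqrt _)) by lra.
  apply (Rmult_le_reg_r (sqrt (hsq u1 u2))); [lra|].
  pose proof (hwind_abs_le u1 u2). field_simplify; lra.
Qed.

Lemma cross_slope_0 : cross_slope 0 0 = 0.
Proof. unfold cross_slope, hsq, hdot. unfold Rdiv. ring. Qed.

Definition cross_slope_d u1 u2 d1 d2 :=
  (2 * hdot u1 u2 d1 d2 * (sqrt (hsq u1 u2) - slip fr * hwind u1 u2)
   - hsq u1 u2 * (hdot u1 u2 d1 d2 / sqrt (hsq u1 u2) - slip fr * hwind d1 d2))
  / (sqrt (hsq u1 u2) - slip fr * hwind u1 u2) ^ 2.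

Lemma cross_slope_d_linear u1 u2 c1 c2 d1 d2 e1 e2 :
  cross_slope_d u1 u2 (c1 * d1 + c2 * e1) (c1 * d2 + c2 * e2) =
  c1 * cross_slope_d u1 u2 d1 d2 + c2 * cross_slope_d u1 u2 e1 e2.
Proof. unfold cross_slope_d, hwind, hsq, hdot. unfold Rdiv. ring. Qed.

Lemma cross_slope_d_0 d1 d2 : cross_slope_d 0 0 d1 d2 = 0.
Proof. unfold cross_slope_d, hwind, hsq, hdot. unfold Rdiv. ring. Qed.

Definition cross_slope_d2 u1 u2 v1 v2 d1 d2 :=
  let H := hsq u1 u2 in let r := sqrt H in
  let D := r - slip fr * hwind u1 u2 in
  let p := hdot u1 u2 d1 d2 in let q := hdot u1 u2 v1 v2 in
  let rr := hdot v1 v2 d1 d2 in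
  let N := 2 * p * D - H * (p / r - slip fr * hwind d1 d2) in
  let D' := q / r - slip fr * hwind v1 v2 in
  let N' := 2 * rr * D + 2 * p * D' - 2 * q * (p / r - slip fr * hwind d1 d2)
            - H * (rr / r - p * q / (r * r * r)) in
  (N' * D - 2 * N * D') / D ^ 3.

Lemma hsq_continuous x y : continuity_2d_pt (fun u v => hsq u v) x y.
Proof. unfold hsq, hdot. continuity_2d. Qed.

Section ConvexCrossSlope.
Hypothesis slip_wind_le : 4 * slip fr ^ 2 * wind_sq <= 1.

Lemma slip_hwind_abs_le u1 u2 :
  Rabs (slip fr * hwind u1 u2) <= sqrt (hsq u1 u2) / 2.
Proof.
  pose proof (hsq_ge0 u1 u2) as H0. pose proof (sqrt_pos (hsq u1 u2)).
  rewrite <- (Rabs_pos_eq (sqrt (hsq u1 u2) / 2)) by lra.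
  apply Rsqr_le_abs_0. rewrite !Rsqr_pow2.
  replace ((sqrt (hsq u1 u2) / 2) ^ 2) with (sqrt (hsq u1 u2) ^ 2 / 4) by field.
  rewrite pow2_sqrt by exact H0.
  pose proof (slip_hwind_sq_le u1 u2). nra.
Qed.

Lemma denominator_ge u1 u2 :
  sqrt (hsq u1 u2) / 2 <= sqrt (hsq u1 u2) - slip fr * hwind u1 u2.
Proof. pose proof (slip_hwind_abs_le u1 u2). pose proof (Rle_abs (slip fr * hwind u1 u2)). lra. Qed.

Lemma denominator_gt0 u1 u2 : (u1, u2) <> (0, 0) ->
  0 < sqrt (hsq u1 u2) - slip fr * hwind u1 u2.
Proof.
  intros nz. pose proof (sqrt_lt_R0 _ (hsq_gt0 _ _ nz)). pose proof (denominator_ge u1 u2). lra.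
Qed.

Lemma cross_slope_gt0 u1 u2 : (u1, u2) <> (0, 0) -> 0 < cross_slope u1 u2.
Proof.
  intros nz. apply Rdiv_lt_0_compat; [exact (hsq_gt0 _ _ nz) | exact (denominator_gt0 _ _ nz)].
Qed.

Lemma cross_slope_le u1 u2 S : (u1, u2) <> (0, 0) ->
  hsq u1 u2 <= S * (sqrt (hsq u1 u2) - slip fr * hwind u1 u2) -> cross_slope u1 u2 <= S.
Proof.
  intros nz h. pose proof (denominator_gt0 _ _ nz).
  unfold cross_slope. apply (Rmult_le_reg_r (sqrt (hsq u1 u2) - slip fr * hwind u1 u2)); [lra|].
  field_simplify; lra.
Qed.

Lemma cross_slope_abs_le u1 u2 : Rabs (cross_slope u1 u2) <= 2 * sqrt (hsq u1 u2).
Proof.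
  destruct (Req_dec (hsq u1 u2) 0) as [h0|h0].
  - unfold cross_slope. rewrite h0, sqrt_0. unfold Rdiv. rewrite Rmult_0_l, Rabs_R0. lra.
  - assert (hp : 0 < hsq u1 u2) by (pose proof (hsq_ge0 u1 u2); lra).
    pose proof (sqrt_lt_R0 _ hp) as sp. pose proof (denominator_ge u1 u2).
    unfold cross_slope. rewrite <- (sqrt_sqrt (hsq u1 u2)) at 1 by lra.
    rewrite Rabs_pos_eq by (apply Rdiv_le_0_compat; nra).
    apply (Rmult_le_reg_r (sqrt (hsq u1 u2) - slip fr * hwind u1 u2)); [lra|].
    field_simplify; nra.
Qed.

Lemma cross_slope_continuous x y : continuity_2d_pt cross_slope x y.
Proof.
  destruct (Req_dec x 0) as [ex|nx]; [destruct (Req_dec y 0) as [ey|ny]|].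
  - subst. intros eps.
    assert (he : 0 < eps / 2) by (destruct eps; simpl; lra).
    assert (c : continuity_2d_pt (fun u v => sqrt (hsq u v)) 0 0)
      by (apply continuity_2d_pt_sqrt; [apply hsq_continuous | apply hsq_ge0]).
    destruct (c (mkposreal _ he)) as [d hd]. exists d. intros u v hu hv.
    specialize (hd u v hu hv). simpl in hd.
    replace (hsq 0 0) with 0 in hd by (unfold hsq, hdot; ring).
    rewrite cross_slope_0, Rminus_0_r.
    rewrite sqrt_0, Rminus_0_r, Rabs_pos_eq in hd by apply sqrt_pos.
    pose proof (cross_slope_abs_le u v). lra.
  - all: assert (nz : (x, y) <> (0, 0)) by (intros e; injection e; auto).
    all: pose proof (denominator_gt0 _ _ nz). all: pose proof (hsq_gt0 _ _ nz).
    all: pose proof (sqrt_lt_R0 _ (hsq_gt0 _ _ nz)).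
    all: unfold cross_slope, hwind, hsq, hdot in *; continuity_2d; lra.
Qed.

Lemma is_derive_cross_slope (u1 u2 : R -> R) t0 v1 v2 :
  is_derive u1 t0 v1 -> is_derive u2 t0 v2 -> (u1 t0, u2 t0) <> (0, 0) ->
  is_derive (fun t => cross_slope (u1 t) (u2 t)) t0 (cross_slope_d (u1 t0) (u2 t0) v1 v2).
Proof.
  intros d1 d2 nz.
  pose proof (hsq_gt0 _ _ nz) as hp. pose proof (denominator_gt0 _ _ nz) as hd.
  pose proof (sqrt_lt_R0 _ hp) as sp.
  unfold cross_slope, cross_slope_d, hwind, hsq, hdot in *.
  auto_derive.
  - repeat split; try (eexists; eassumption); lra.
  - replace (Derive (fun x => u1 x) t0) with v1 by (symmetry; now apply is_derive_unique).
    replace (Derive (fun x => u2 x) t0) with v2 by (symmetry; now apply is_derive_unique).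
    field. lra.
Qed.

Lemma is_derive_cross_slope_d (u1 u2 : R -> R) t0 v1 v2 d1 d2 :
  is_derive u1 t0 v1 -> is_derive u2 t0 v2 -> (u1 t0, u2 t0) <> (0, 0) ->
  is_derive (fun t => cross_slope_d (u1 t) (u2 t) d1 d2) t0
    (cross_slope_d2 (u1 t0) (u2 t0) v1 v2 d1 d2).
Proof.
  intros du1 du2 nz.
  pose proof (hsq_gt0 _ _ nz) as hp. pose proof (denominator_gt0 _ _ nz) as hd.
  pose proof (sqrt_lt_R0 _ hp) as sp.
  unfold cross_slope_d2, cross_slope_d, hwind, hsq, hdot in *. cbv zeta.
  auto_derive.
  - repeat split; try (eexists; eassumption);
      repeat apply Rmult_integral_contrapositive_currified; lra.
  - replace (Derive (fun x => u1 x) t0) with v1 by (symmetry; now apply is_derive_unique).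
    replace (Derive (fun x => u2 x) t0) with v2 by (symmetry; now apply is_derive_unique).
    field. lra.
Qed.

Lemma cross_slope_d_continuous x y d1 d2 : (x, y) <> (0, 0) ->
  continuity_2d_pt (fun u v => cross_slope_d u v d1 d2) x y.
Proof.
  intros nz.
  pose proof (hsq_gt0 _ _ nz). pose proof (denominator_gt0 _ _ nz).
  pose proof (sqrt_lt_R0 _ (hsq_gt0 _ _ nz)).
  unfold cross_slope_d, hwind, hsq, hdot in *. continuity_2d; try lra.
  apply pow_nonzero. lra.
Qed.

Lemma cross_slope_d_euler u1 u2 : (u1, u2) <> (0, 0) ->
  cross_slope_d u1 u2 u1 u2 = cross_slope u1 u2.
Proof.
  intros nz.
  pose proof (hsq_gt0 _ _ nz) as hp. pose proof (denominator_gt0 _ _ nz).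
  pose proof (sqrt_lt_R0 _ hp). pose proof (sqrt_sqrt _ (Rlt_le _ _ hp)) as ss.
  unfold cross_slope_d, cross_slope. fold (hsq u1 u2) (hwind u1 u2).
  set (r := sqrt (hsq u1 u2)) in *. rewrite <- ss. field. lra.
Qed.

End ConvexCrossSlope.

(* 4 eta^2 h(G,G) < 1 is the strong convexity condition for F, and
   (1 - eta)^2 h(G,G) < 1 says F(-G) < 1: the wind is weak for F. *)
Definition weak_wind :=
  0 <= slip fr <= 1 /\ 4 * slip fr ^ 2 * wind_sq < 1 /\ (1 - slip fr) ^ 2 * wind_sq < 1.

Definition wind_rate := (1 - sqrt wind_sq * (1 - slip fr)) / 9.

Section WeakWind.
Hypothesis weak : weak_wind.

Lemma weak_wind_convex : 4 * slip fr ^ 2 * wind_sq <= 1.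
Proof. apply Rlt_le, weak. Qed.

Lemma weak_wind_sqrt : 2 * slip fr * sqrt wind_sq < 1 /\ (1 - slip fr) * sqrt wind_sq < 1.
Proof.
  destruct weak as [he [hk hw]].
  split; apply mul_sqrt_lt1; try apply wind_sq_ge0; try lra.
Qed.

Lemma wind_rate_gt0 : 0 < wind_rate.
Proof. pose proof weak_wind_sqrt. unfold wind_rate. lra. Qed.

Lemma wind_rate_le : wind_rate <= 1 / 9.
Proof.
  destruct weak as [he _]. unfold wind_rate.
  pose proof (sqrt_pos wind_sq).
  assert (0 <= sqrt wind_sq * (1 - slip fr)) by (apply Rmult_le_pos; lra). lra.
Qed.

Lemma slip_hwind_abs_lt u1 u2 : 0 < hsq u1 u2 ->
  Rabs (slip fr * hwind u1 u2) < sqrt (hsq u1 u2) / 2.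
Proof.
  intros hp. destruct weak as [_ [hk _]].
  pose proof (sqrt_lt_R0 _ hp).
  rewrite <- (Rabs_pos_eq (sqrt (hsq u1 u2) / 2)) by lra.
  apply Rsqr_lt_abs_0. rewrite !Rsqr_pow2.
  replace ((sqrt (hsq u1 u2) / 2) ^ 2) with (sqrt (hsq u1 u2) ^ 2 / 4) by field.
  rewrite pow2_sqrt by lra.
  pose proof (slip_hwind_sq_le u1 u2). nra.
Qed.

(* The key estimate: s |-> F(w - s G) - s decreases at rate at least wind_rate. *)
Lemma cross_slope_d_wind_ge u1 u2 : (u1, u2) <> (0, 0) ->
  wind_rate <= 1 + cross_slope_d u1 u2 (wind_x fr) (wind_y fr).
Proof.
  intros nz.
  pose proof (hsq_gt0 _ _ nz) as hp. pose proof (sqrt_lt_R0 _ hp) as sp.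
  pose proof (sqrt_sqrt _ (Rlt_le _ _ hp)) as ss.
  pose proof (slip_hwind_abs_le weak_wind_convex u1 u2) as heK.
  pose proof (hwind_ratio_bound u1 u2 nz) as zb.
  pose proof weak as [he _]. destruct weak_wind_sqrt as [k1 w1].
  pose proof (sqrt_pos wind_sq) as gp. pose proof (sqrt_sqrt _ wind_sq_ge0) as gs.
  unfold cross_slope_d, wind_rate.
  change (hwind (wind_x fr) (wind_y fr)) with wind_sq.
  change (hdot u1 u2 (wind_x fr) (wind_y fr)) with (hwind u1 u2).
  set (r := sqrt (hsq u1 u2)) in *. set (g := sqrt wind_sq) in *.
  rewrite <- gs.
  set (e := slip fr) in *.
  set (z := hwind u1 u2 / r) in *.
  replace (hwind u1 u2) with (z * r) in * by (unfold z; field; lra).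
  rewrite <- ss.
  pose proof (concave_quadratic_ge e g z ltac:(lra) gp k1 ltac:(lra) zb) as Q.
  pose proof (Rle_abs (e * (z * r))).
  pose proof (Rle_abs (- (e * (z * r)))) as Hn. rewrite Rabs_Ropp in Hn.
  assert (Dp : 0 < r - e * (z * r)) by lra.
  apply (Rmult_le_reg_r ((r - e * (z * r)) ^ 2)); [apply pow_lt; lra|].
  lazymatch goal with |- _ <= ?X =>
    replace X with (r * r * (1 + z * (1 - 2 * e) + z * z * (e * e - 2 * e) + e * g * g))
      by (field; lra) end.
  assert ((1 - g * (1 - e)) / 9 * (r - e * (z * r)) ^ 2
          <= (1 - g * (1 - e)) / 9 * (9 / 4 * (r * r))).
  { apply Rmult_le_compat_l; [lra|]. simpl. nra. }
  assert (r * r * ((1 - g * (1 - e)) / 4)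
          <= r * r * (1 + z * (1 - 2 * e) + z * z * (e * e - 2 * e) + e * g * g)).
  { apply Rmult_le_compat_l; [nra | lra]. }
  lra.
Qed.

Lemma cross_slope_d_wind_ge_all u1 u2 :
  wind_rate <= 1 + cross_slope_d u1 u2 (wind_x fr) (wind_y fr).
Proof.
  destruct (Req_dec u1 0) as [e1|n1]; [destruct (Req_dec u2 0) as [e2|n2]|].
  - subst. rewrite cross_slope_d_0. pose proof wind_rate_le. lra.
  - apply cross_slope_d_wind_ge. intros e. injection e. auto.
  - apply cross_slope_d_wind_ge. intros e. injection e. auto.
Qed.

Lemma cross_slope_d2_tangent_gt0 u1 u2 v1 v2 : (u1, u2) <> (0, 0) -> (v1, v2) <> (0, 0) ->
  cross_slope u1 u2 = 1 -> cross_slope_d u1 u2 v1 v2 = 0 ->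
  0 < cross_slope_d2 u1 u2 v1 v2 v1 v2.
Proof.
  intros nz nzv hF hN.
  pose proof (hsq_gt0 _ _ nz) as hp. pose proof (hsq_gt0 _ _ nzv) as hv.
  pose proof (slip_hwind_abs_lt _ _ hp) as heK.
  pose proof (sqrt_lt_R0 _ hp) as sp.
  pose proof (sqrt_sqrt _ (Rlt_le _ _ hp)) as ss.
  unfold cross_slope_d2, cross_slope_d, cross_slope in *. cbv zeta.
  fold (hsq u1 u2) (hwind u1 u2) (hsq v1 v2) in *.
  set (r := sqrt (hsq u1 u2)) in *.
  set (D := r - slip fr * hwind u1 u2) in *.
  set (p := hdot u1 u2 v1 v2) in *.
  set (V := hsq v1 v2) in *.
  set (k := hwind v1 v2) in *.
  set (H := hsq u1 u2) in *.
  pose proof (Rle_abs (slip fr * hwind u1 u2)).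
  assert (Dp : 0 < D) by (unfold D; lra).
  assert (DH : D = H) by (rewrite <- (Rmult_1_l D), <- hF; field; lra).
  assert (N0 : 2 * p * D - H * (p / r - slip fr * k) = 0).
  { apply (Rmult_eq_reg_r (/ D ^ 2)); [|apply Rinv_neq_0_compat, pow_nonzero; lra].
    rewrite Rmult_0_l. exact hN. }
  rewrite N0.
  assert (rh : 1 / 2 < r) by (unfold D in DH; nra).
  assert (E : 2 * V * D + 2 * p * (p / r - slip fr * k) - 2 * p * (p / r - slip fr * k)
              - H * (V / r - p * p / (r * r * r)) = r * V * (2 * r - 1) + p * p / r).
  { rewrite DH, <- ss. field. lra. }
  rewrite E.
  apply Rdiv_lt_0_compat; [|apply pow_lt; lra].
  replace (2 * 0 * (p / r - slip fr * k)) with 0 by ring. rewrite Rminus_0_r.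
  apply Rmult_lt_0_compat; [|lra].
  assert (0 <= p * p / r) by (apply Rdiv_le_0_compat; nra).
  assert (0 < r * V * (2 * r - 1)) by (apply Rmult_lt_0_compat; [apply Rmult_lt_0_compat|]; lra).
  lra.
Qed.

End WeakWind.
End Frame.

(** * Zermelo navigation *)

Section WindGap.
Variable fr : wind_frame.
Hypothesis convex : 4 * slip fr ^ 2 * wind_sq fr <= 1.

Definition wind_gap w1 w2 s :=
  cross_slope fr (w1 - s * wind_x fr) (w2 - s * wind_y fr) - s.

Lemma wind_gap_0 w1 w2 : wind_gap w1 w2 0 = cross_slope fr w1 w2.
Proof. unfold wind_gap. rewrite !Rmult_0_l, !Rminus_0_r. reflexivity. Qed.

Lemma wind_gap_continuous w1 w2 s : continuity_pt (wind_gap w1 w2) s.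
Proof.
  unfold wind_gap. apply continuity_pt_minus; [|apply continuity_pt_id].
  apply (continuity_pt_comp_2d (cross_slope fr));
    [apply cross_slope_continuous, convex | apply continuity_pt_affine ..].
Qed.

Lemma wind_gap_continuous_2d s x y : continuity_2d_pt (fun a b => wind_gap a b s) x y.
Proof.
  unfold wind_gap. apply continuity_2d_pt_minus; [|apply continuity_2d_pt_const].
  apply (continuity_2d_pt_comp (cross_slope fr)
           (fun a b => a - s * wind_x fr) (fun a b => b - s * wind_y fr));
    [apply cross_slope_continuous, convex | continuity_2d ..].
Qed.

Lemma is_derive_wind_gap w1 w2 s :
  (w1 - s * wind_x fr, w2 - s * wind_y fr) <> (0, 0) ->
  is_derive (wind_gap w1 w2) s
    (- cross_slope_d fr (w1 - s * wind_x fr) (w2 - s * wind_y fr) (wind_x fr) (wind_y fr) - 1).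
Proof.
  intros nz. unfold wind_gap.
  apply (is_derive_minus (fun t => cross_slope fr (w1 - t * wind_x fr) (w2 - t * wind_y fr))
           (fun t => t)); [|auto_derive; auto].
  set (u := cross_slope_d fr (w1 - s * wind_x fr) (w2 - s * wind_y fr)).
  replace (- u (wind_x fr) (wind_y fr))
    with (u ((-1) * wind_x fr + 0 * 0) ((-1) * wind_y fr + 0 * 0))
    by (unfold u; rewrite cross_slope_d_linear; ring).
  apply (is_derive_cross_slope fr convex
           (fun t => w1 - t * wind_x fr) (fun t => w2 - t * wind_y fr)); auto;
    auto_derive; auto; ring.
Qed.

End WindGap.

Section Zermelo.
Variable fr : wind_frame.
Hypothesis weak : weak_wind fr.
Let convex : 4 * slip fr ^ 2 * wind_sq fr <= 1 := weak_wind_convex fr weak.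

Lemma wind_gap_decreasing_on w1 w2 s1 s2 : s1 <= s2 ->
  (forall s, s1 < s < s2 -> (w1 - s * wind_x fr, w2 - s * wind_y fr) <> (0, 0)) ->
  wind_gap fr w1 w2 s2 - wind_gap fr w1 w2 s1 <= - wind_rate fr * (s2 - s1).
Proof.
  intros hs hnz.
  destruct (MVT_gen (wind_gap fr w1 w2) s1 s2 (fun s =>
      - cross_slope_d fr (w1 - s * wind_x fr) (w2 - s * wind_y fr) (wind_x fr) (wind_y fr) - 1))
    as [c [hc e]].
  - intros x hx. rewrite Rmin_left, Rmax_right in hx by lra.
    apply (is_derive_wind_gap fr convex); auto.
  - intros x _. apply (wind_gap_continuous fr convex).
  - rewrite e. apply Rmult_le_compat_r; [lra|].
    pose proof (cross_slope_d_wind_ge_all fr weak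
                  (w1 - c * wind_x fr) (w2 - c * wind_y fr)). lra.
Qed.

(* The path s |-> w - s G passes through 0 at most once, where F is not
   differentiable; the estimate is glued across that point. *)
Lemma wind_gap_decreasing w1 w2 s1 s2 : (w1, w2) <> (0, 0) -> s1 <= s2 ->
  wind_gap fr w1 w2 s2 - wind_gap fr w1 w2 s1 <= - wind_rate fr * (s2 - s1).
Proof.
  intros nz hs.
  destruct (classic (exists s0, s1 < s0 < s2 /\
                       (w1 - s0 * wind_x fr, w2 - s0 * wind_y fr) = (0, 0)))
    as [[s0 [h0 e0]]|no].
  - injection e0 as e1 e2.
    assert (once : forall s, s <> s0 -> (w1 - s * wind_x fr, w2 - s * wind_y fr) <> (0, 0)).
    { intros s hs0 e. injection e as e3 e4. apply nz.
      assert (wind_x fr = 0) by (apply (Rmult_eq_reg_l (s - s0)); lra).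
      assert (wind_y fr = 0) by (apply (Rmult_eq_reg_l (s - s0)); lra).
      f_equal; nra. }
    pose proof (wind_gap_decreasing_on w1 w2 s1 s0 ltac:(lra) ltac:(intros s hs'; apply once; lra)).
    pose proof (wind_gap_decreasing_on w1 w2 s0 s2 ltac:(lra) ltac:(intros s hs'; apply once; lra)).
    lra.
  - apply wind_gap_decreasing_on; auto. intros s hs' e. apply no. exists s. auto.
Qed.

Lemma wind_gap_root_exists w1 w2 : (w1, w2) <> (0, 0) ->
  exists s, 0 < s /\ wind_gap fr w1 w2 s = 0.
Proof.
  intros nz.
  pose proof (cross_slope_gt0 fr convex w1 w2 nz) as F0.
  rewrite <- wind_gap_0 in F0.
  pose proof (wind_rate_gt0 fr weak) as hm.
  set (S := wind_gap fr w1 w2 0 / wind_rate fr + 1).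
  assert (hS : 0 < S) by (unfold S; apply Rplus_lt_0_compat; [apply Rdiv_lt_0_compat|]; lra).
  pose proof (wind_gap_decreasing w1 w2 0 S nz ltac:(lra)) as D.
  replace (- wind_rate fr * (S - 0)) with (- wind_gap fr w1 w2 0 - wind_rate fr) in D
    by (unfold S; field; lra).
  destruct (IVT_gen (wind_gap fr w1 w2) 0 S 0) as [x [hx ex]].
  - intros x. apply (wind_gap_continuous fr convex).
  - rewrite Rmin_right, Rmax_left; lra.
  - rewrite Rmin_left, Rmax_right in hx by lra.
    exists x. split; [destruct (Req_dec x 0) as [->|]; lra | exact ex].
Qed.

Lemma wind_gap_sign w1 w2 s0 s : (w1, w2) <> (0, 0) -> wind_gap fr w1 w2 s0 = 0 ->
  (s < s0 -> 0 < wind_gap fr w1 w2 s) /\ (s0 < s -> wind_gap fr w1 w2 s < 0).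
Proof.
  intros nz e. pose proof (wind_rate_gt0 fr weak). split; intros h.
  - pose proof (wind_gap_decreasing w1 w2 s s0 nz ltac:(lra)). nra.
  - pose proof (wind_gap_decreasing w1 w2 s0 s nz ltac:(lra)). nra.
Qed.

Lemma wind_gap_root_unique w1 w2 s1 s2 : (w1, w2) <> (0, 0) ->
  wind_gap fr w1 w2 s1 = 0 -> wind_gap fr w1 w2 s2 = 0 -> s1 = s2.
Proof.
  intros nz e1 e2. destruct (wind_gap_sign w1 w2 s1 s2 nz e1) as [lt gt].
  destruct (Rtotal_order s1 s2) as [h|[h|h]]; [specialize (gt h) | exact h | specialize (lt h)];
    lra.
Qed.

Definition zermelo w1 w2 := epsilon (inhabits 0) (fun s =>
  ((w1, w2) = (0, 0) /\ s = 0) \/ ((w1, w2) <> (0, 0) /\ 0 < s /\ wind_gap fr w1 w2 s = 0)).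

Lemma zermelo_0 : zermelo 0 0 = 0.
Proof.
  unfold zermelo.
  destruct (epsilon_spec (inhabits 0) (fun s =>
    ((0, 0) = (0, 0) /\ s = 0) \/ (((0:R), (0:R)) <> (0, 0) /\ 0 < s /\ wind_gap fr 0 0 s = 0)))
    as [[_ h]|[h _]]; [exists 0; left; auto | exact h | now contradict h].
Qed.

Lemma zermelo_spec w1 w2 : (w1, w2) <> (0, 0) ->
  0 < zermelo w1 w2 /\ wind_gap fr w1 w2 (zermelo w1 w2) = 0.
Proof.
  intros nz. unfold zermelo.
  destruct (epsilon_spec (inhabits 0) (fun s =>
    ((w1, w2) = (0, 0) /\ s = 0) \/ ((w1, w2) <> (0, 0) /\ 0 < s /\ wind_gap fr w1 w2 s = 0)))
    as [[h _]|[_ h]]; [|contradiction|exact h].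
  destruct (wind_gap_root_exists w1 w2 nz) as [s hs]. exists s. right. auto.
Qed.

Lemma zermelo_unique w1 w2 s : (w1, w2) <> (0, 0) -> wind_gap fr w1 w2 s = 0 ->
  s = zermelo w1 w2.
Proof.
  intros nz e. eapply wind_gap_root_unique; eauto. apply zermelo_spec, nz.
Qed.

Lemma zermelo_shift_nonzero w1 w2 : (w1, w2) <> (0, 0) ->
  (w1 - zermelo w1 w2 * wind_x fr, w2 - zermelo w1 w2 * wind_y fr) <> (0, 0).
Proof.
  intros nz h. injection h as h1 h2. destruct (zermelo_spec w1 w2 nz) as [hp e].
  unfold wind_gap in e. rewrite h1, h2, cross_slope_0 in e. lra.
Qed.

(* The root is trapped between s0 - ep and s0 + ep, where the gap has a strict
   sign that persists under small perturbations of w. *)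
Lemma zermelo_continuous w1 w2 : (w1, w2) <> (0, 0) ->
  continuity_2d_pt zermelo w1 w2.
Proof.
  intros nz eps.
  destruct (zermelo_spec w1 w2 nz) as [sp0 e0].
  set (s0 := zermelo w1 w2) in *.
  set (ep := Rmin (eps / 2) (s0 / 2)).
  assert (hep : 0 < ep) by (unfold ep; apply Rmin_pos; destruct eps; simpl; lra).
  assert (ep_le : ep <= eps / 2 /\ ep <= s0 / 2) by (split; [apply Rmin_l | apply Rmin_r]).
  destruct (wind_gap_sign w1 w2 s0 (s0 - ep) nz e0) as [A _].
  destruct (wind_gap_sign w1 w2 s0 (s0 + ep) nz e0) as [_ B].
  specialize (A ltac:(lra)). specialize (B ltac:(lra)).
  destruct (wind_gap_continuous_2d fr convex (s0 - ep) w1 w2 (mkposreal _ A)) as [d1 h1].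
  destruct (wind_gap_continuous_2d fr convex (s0 + ep) w1 w2
              (mkposreal (- wind_gap fr w1 w2 (s0 + ep)) ltac:(lra))) as [d2 h2].
  destruct (nonzero_near w1 w2 nz) as [d3 h3].
  assert (hd : 0 < Rmin d1 (Rmin d2 d3))
    by (destruct d1, d2, d3; simpl; repeat apply Rmin_pos; lra).
  exists (mkposreal _ hd). intros a b ha hb. simpl in ha, hb.
  pose proof (Rmin_l d1 (Rmin d2 d3)). pose proof (Rmin_r d1 (Rmin d2 d3)).
  pose proof (Rmin_l d2 d3). pose proof (Rmin_r d2 d3).
  specialize (h1 a b ltac:(lra) ltac:(lra)). specialize (h2 a b ltac:(lra) ltac:(lra)).
  specialize (h3 a b ltac:(lra) ltac:(lra)). simpl in h1, h2.
  apply Rabs_lt_between in h1. apply Rabs_lt_between in h2.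
  destruct (IVT_gen (wind_gap fr a b) (s0 - ep) (s0 + ep) 0) as [x [hx ex]].
  - intros x. apply (wind_gap_continuous fr convex).
  - rewrite Rmin_right, Rmax_left; lra.
  - rewrite Rmin_left, Rmax_right in hx by lra.
    rewrite <- (zermelo_unique a b x h3 ex).
    apply Rabs_lt_between. destruct eps; simpl in *; lra.
Qed.

Lemma wind_gap_line_differentiable w1 w2 d1 d2 s0 :
  (w1 - s0 * wind_x fr, w2 - s0 * wind_y fr) <> (0, 0) ->
  differentiable_pt_lim (fun t s => wind_gap fr (w1 + t * d1) (w2 + t * d2) s) 0 s0
    (cross_slope_d fr (w1 - s0 * wind_x fr) (w2 - s0 * wind_y fr) d1 d2)
    (- cross_slope_d fr (w1 - s0 * wind_x fr) (w2 - s0 * wind_y fr) (wind_x fr) (wind_y fr) - 1).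
Proof.
  intros nz.
  set (U1 := fun t s => w1 + t * d1 - s * wind_x fr).
  set (U2 := fun t s => w2 + t * d2 - s * wind_y fr).
  assert (U0 : forall s, U1 0 s = w1 - s * wind_x fr /\ U2 0 s = w2 - s * wind_y fr)
    by (intros s; unfold U1, U2; split; ring).
  assert (cU1 : continuity_2d_pt U1 0 s0) by (unfold U1; continuity_2d).
  assert (cU2 : continuity_2d_pt U2 0 s0) by (unfold U2; continuity_2d).
  assert (nz_near : locally_2d (fun t s => hsq fr (U1 t s) (U2 t s) <> 0) 0 s0).
  { apply continuity_2d_pt_neq_0.
    - apply (continuity_2d_pt_comp (hsq fr)); [apply hsq_continuous | exact cU1 | exact cU2].
    - destruct (U0 s0) as [-> ->]. apply Rgt_not_eq, hsq_gt0, nz. }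
  destruct (U0 s0) as [E1 E2]. rewrite <- E1, <- E2.
  apply (differentiable_pt_lim_of_partials _
           (fun t s => cross_slope_d fr (U1 t s) (U2 t s) d1 d2)
           (fun t s => - cross_slope_d fr (U1 t s) (U2 t s) (wind_x fr) (wind_y fr) - 1)).
  - destruct nz_near as [dl hl]. exists dl. intros t s ht hs.
    assert (nzu : (U1 t s, U2 t s) <> (0, 0)).
    { intros e. injection e as e1 e2. apply (hl t s ht hs). rewrite e1, e2.
      unfold hsq, hdot. ring. }
    split.
    + unfold wind_gap. rewrite <- (Rminus_0_r (cross_slope_d fr _ _ d1 d2)).
      apply (is_derive_minus
               (fun z => cross_slope fr (w1 + z * d1 - s * wind_x fr) (w2 + z * d2 - s * wind_y fr))
               (fun _ => s)); [|auto_derive; auto].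
      apply (is_derive_cross_slope fr convex (fun z => U1 z s) (fun z => U2 z s)); auto;
        unfold U1, U2; auto_derive; auto; ring.
    + apply (is_derive_wind_gap fr convex); auto.
  - apply (continuity_2d_pt_comp (fun a b => cross_slope_d fr a b d1 d2)); auto.
    apply cross_slope_d_continuous; [exact convex | rewrite E1, E2; exact nz].
  - apply continuity_2d_pt_minus; [apply continuity_2d_pt_opp | apply continuity_2d_pt_const].
    apply (continuity_2d_pt_comp (fun a b => cross_slope_d fr a b (wind_x fr) (wind_y fr))); auto.
    apply cross_slope_d_continuous; [exact convex | rewrite E1, E2; exact nz].
Qed.

(* Implicit differentiation of F(w - t G) = t. *)
Definition zermelo_d w1 w2 d1 d2 :=
  let u1 := w1 - zermelo w1 w2 * wind_x fr in
  let u2 := w2 - zermelo w1 w2 * wind_y fr in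
  cross_slope_d fr u1 u2 d1 d2 / (1 + cross_slope_d fr u1 u2 (wind_x fr) (wind_y fr)).

Lemma is_derive_zermelo_line w1 w2 d1 d2 : (w1, w2) <> (0, 0) ->
  is_derive (fun t => zermelo (w1 + t * d1) (w2 + t * d2)) 0 (zermelo_d w1 w2 d1 d2).
Proof.
  intros nz.
  pose proof (zermelo_shift_nonzero w1 w2 nz) as unz.
  set (S := fun t => zermelo (w1 + t * d1) (w2 + t * d2)).
  assert (S0 : S 0 = zermelo w1 w2)
    by (unfold S; rewrite !Rmult_0_l, !Rplus_0_r; reflexivity).
  pose proof (cross_slope_d_wind_ge fr weak _ _ unz). pose proof (wind_rate_gt0 fr weak).
  assert (cS : continuity_pt S 0).
  { apply (continuity_pt_comp_2d zermelo (fun t => w1 + t * d1) (fun t => w2 + t * d2)).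
    - rewrite !Rmult_0_l, !Rplus_0_r. apply zermelo_continuous, nz.
    - apply (continuity_pt_of_is_derive _ _ d1). auto_derive; auto. ring.
    - apply (continuity_pt_of_is_derive _ _ d2). auto_derive; auto. ring. }
  assert (root : locally 0
            (fun t => wind_gap fr (w1 + t * d1) (w2 + t * d2) (S t) = 0)).
  { destruct (nonzero_near_line w1 w2 d1 d2 nz) as [d hd].
    exists d. intros t ht. change (Rabs (t - 0) < d) in ht. rewrite Rminus_0_r in ht.
    apply zermelo_spec, hd, ht. }
  pose proof (wind_gap_line_differentiable w1 w2 d1 d2 _ unz) as diff.
  replace (zermelo_d w1 w2 d1 d2) with
    (- cross_slope_d fr (w1 - zermelo w1 w2 * wind_x fr)
                       (w2 - zermelo w1 w2 * wind_y fr) d1 d2 /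
     (- cross_slope_d fr (w1 - zermelo w1 w2 * wind_x fr)
                         (w2 - zermelo w1 w2 * wind_y fr) (wind_x fr) (wind_y fr) - 1))
    by (unfold zermelo_d; field; lra).
  apply (is_derive_implicit _ S 0 _ _ _ S0 diff); [lra | exact cS | exact root].
Qed.

Lemma zermelo_d_continuous w1 w2 d1 d2 : (w1, w2) <> (0, 0) ->
  continuity_2d_pt (fun a b => zermelo_d a b d1 d2) w1 w2.
Proof.
  intros nz.
  pose proof (zermelo_shift_nonzero w1 w2 nz) as unz.
  assert (cR : continuity_2d_pt zermelo w1 w2) by (apply zermelo_continuous, nz).
  assert (cu1 : continuity_2d_pt (fun a b => a - zermelo a b * wind_x fr) w1 w2)
    by (apply continuity_2d_pt_minus, continuity_2d_pt_mult;
        [apply continuity_2d_pt_id1 | exact cR | apply continuity_2d_pt_const]).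
  assert (cu2 : continuity_2d_pt (fun a b => b - zermelo a b * wind_y fr) w1 w2)
    by (apply continuity_2d_pt_minus, continuity_2d_pt_mult;
        [apply continuity_2d_pt_id2 | exact cR | apply continuity_2d_pt_const]).
  unfold zermelo_d. apply continuity_2d_pt_div.
  - apply (continuity_2d_pt_comp (fun x y => cross_slope_d fr x y d1 d2)); auto.
    apply cross_slope_d_continuous; auto.
  - apply continuity_2d_pt_plus; [apply continuity_2d_pt_const|].
    apply (continuity_2d_pt_comp (fun x y => cross_slope_d fr x y (wind_x fr) (wind_y fr))); auto.
    apply cross_slope_d_continuous; auto.
  - pose proof (cross_slope_d_wind_ge fr weak _ _ unz). pose proof (wind_rate_gt0 fr weak). lra.
Qed.

Lemma zermelo_differentiable w1 w2 : (w1, w2) <> (0, 0) ->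
  differentiable_pt_lim zermelo w1 w2 (zermelo_d w1 w2 1 0) (zermelo_d w1 w2 0 1).
Proof.
  intros nz.
  apply (differentiable_pt_lim_of_partials _ (fun a b => zermelo_d a b 1 0)
           (fun a b => zermelo_d a b 0 1));
    [| apply zermelo_d_continuous, nz ..].
  destruct (nonzero_near w1 w2 nz) as [d hd]. exists d. intros u v hu hv.
  specialize (hd u v hu hv).
  split; apply is_derive_shift.
  - eapply is_derive_ext; [|exact (is_derive_zermelo_line u v 1 0 hd)].
    intros s. simpl. f_equal; ring.
  - eapply is_derive_ext; [|exact (is_derive_zermelo_line u v 0 1 hd)].
    intros s. simpl. f_equal; ring.
Qed.

Lemma zermelo_d_linear w1 w2 c1 c2 d1 d2 e1 e2 :
  zermelo_d w1 w2 (c1 * d1 + c2 * e1) (c1 * d2 + c2 * e2) =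
  c1 * zermelo_d w1 w2 d1 d2 + c2 * zermelo_d w1 w2 e1 e2.
Proof.
  unfold zermelo_d. cbv zeta. rewrite cross_slope_d_linear.
  unfold Rdiv. ring.
Qed.

Lemma zermelo_d_euler w1 w2 : (w1, w2) <> (0, 0) ->
  zermelo_d w1 w2 w1 w2 = zermelo w1 w2.
Proof.
  intros nz.
  pose proof (zermelo_shift_nonzero w1 w2 nz) as unz.
  destruct (zermelo_spec w1 w2 nz) as [_ e0].
  pose proof (cross_slope_d_wind_ge fr weak _ _ unz). pose proof (wind_rate_gt0 fr weak).
  unfold zermelo_d. cbv zeta. set (s := zermelo w1 w2) in *.
  replace w1 with (1 * (w1 - s * wind_x fr) + s * wind_x fr) at 2 by ring.
  replace w2 with (1 * (w2 - s * wind_y fr) + s * wind_y fr) at 2 by ring.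
  rewrite cross_slope_d_linear, cross_slope_d_euler by (exact convex || exact unz).
  replace (cross_slope fr (w1 - s * wind_x fr) (w2 - s * wind_y fr)) with s
    by (unfold wind_gap in e0; lra).
  field. lra.
Qed.

Lemma is_derive_zermelo_along w1 w2 v1 v2 t : (w1 + t * v1, w2 + t * v2) <> (0, 0) ->
  is_derive (fun t => zermelo (w1 + t * v1) (w2 + t * v2)) t
    (zermelo_d (w1 + t * v1) (w2 + t * v2) v1 v2).
Proof.
  intros nz. apply is_derive_shift.
  eapply is_derive_ext; [|exact (is_derive_zermelo_line _ _ v1 v2 nz)].
  intros s. simpl. f_equal; ring.
Qed.

Lemma cross_slope_d_of_zermelo_d_0 w1 w2 v1 v2 : (w1, w2) <> (0, 0) ->
  zermelo_d w1 w2 v1 v2 = 0 ->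
  cross_slope_d fr (w1 - zermelo w1 w2 * wind_x fr) (w2 - zermelo w1 w2 * wind_y fr) v1 v2
  = 0.
Proof.
  intros nz tang. pose proof (zermelo_shift_nonzero w1 w2 nz) as unz.
  pose proof (cross_slope_d_wind_ge fr weak _ _ unz). pose proof (wind_rate_gt0 fr weak).
  unfold zermelo_d in tang. cbv zeta in tang.
  apply Rmult_integral in tang as [e|e]; [exact e|].
  apply Rinv_neq_0_compat in e; [contradiction | lra].
Qed.

(* The quotient rule, with dF(u)[v] = 0 at t = 0 and u'(0) = v. *)
Lemma is_derive_zermelo_d_tangent w1 w2 v1 v2 : (w1, w2) <> (0, 0) ->
  zermelo_d w1 w2 v1 v2 = 0 ->
  let u1 := w1 - zermelo w1 w2 * wind_x fr in
  let u2 := w2 - zermelo w1 w2 * wind_y fr in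
  is_derive (fun t => zermelo_d (w1 + t * v1) (w2 + t * v2) v1 v2) 0
    (cross_slope_d2 fr u1 u2 v1 v2 v1 v2 / (1 + cross_slope_d fr u1 u2 (wind_x fr) (wind_y fr))).
Proof.
  intros nz tang u1 u2.
  pose proof (zermelo_shift_nonzero w1 w2 nz) as unz. fold u1 u2 in unz.
  pose proof (cross_slope_d_wind_ge fr weak _ _ unz). pose proof (wind_rate_gt0 fr weak).
  pose proof (cross_slope_d_of_zermelo_d_0 w1 w2 v1 v2 nz tang) as Nv. fold u1 u2 in Nv.
  set (Q := 1 + cross_slope_d fr u1 u2 (wind_x fr) (wind_y fr)) in *.
  set (line := fun t => zermelo (w1 + t * v1) (w2 + t * v2)).
  pose proof (is_derive_zermelo_line w1 w2 v1 v2 nz) as dline0. rewrite tang in dline0.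
  set (U1 := fun t => w1 + t * v1 - line t * wind_x fr).
  set (U2 := fun t => w2 + t * v2 - line t * wind_y fr).
  assert (dU1 : is_derive U1 0 v1 /\ is_derive U2 0 v2).
  { unfold U1, U2. split; (auto_derive; [exists 0; exact dline0|]);
      replace (Derive (fun x => line x) 0) with 0 by (symmetry; now apply is_derive_unique);
      ring. }
  destruct dU1 as [dU1 dU2].
  assert (U10 : U1 0 = u1) by (unfold U1, line, u1; rewrite !Rmult_0_l, !Rplus_0_r; reflexivity).
  assert (U20 : U2 0 = u2) by (unfold U2, line, u2; rewrite !Rmult_0_l, !Rplus_0_r; reflexivity).
  assert (Unz : (U1 0, U2 0) <> (0, 0)) by (rewrite U10, U20; exact unz).
  pose proof (is_derive_cross_slope_d fr convex U1 U2 0 v1 v2 v1 v2 dU1 dU2 Unz) as dN.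
  pose proof (is_derive_cross_slope_d fr convex U1 U2 0 v1 v2 (wind_x fr) (wind_y fr)
                dU1 dU2 Unz) as dM.
  rewrite U10, U20 in dN, dM.
  assert (dM' : is_derive (fun t => 1 + cross_slope_d fr (U1 t) (U2 t) (wind_x fr) (wind_y fr)) 0
                 (0 + cross_slope_d2 fr u1 u2 v1 v2 (wind_x fr) (wind_y fr)))
    by (apply (is_derive_plus (fun _ => 1)); [auto_derive; auto | exact dM]).
  pose proof (is_derive_div _ _ 0 _ _ dN dM' ltac:(cbv beta; rewrite U10, U20; fold Q; lra))
    as dE.
  cbv beta in dE. rewrite U10, U20, Nv in dE. fold Q in dE.
  replace (cross_slope_d2 fr u1 u2 v1 v2 v1 v2 / Q) with
    ((cross_slope_d2 fr u1 u2 v1 v2 v1 v2 * Q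
      - 0 * (0 + cross_slope_d2 fr u1 u2 v1 v2 (wind_x fr) (wind_y fr))) / Q ^ 2)
    by (field; lra).
  exact dE.
Qed.

Lemma zermelo_tangent_line_convex w1 w2 v1 v2 :
  (w1, w2) <> (0, 0) -> zermelo w1 w2 = 1 -> (v1, v2) <> (0, 0) ->
  zermelo_d w1 w2 v1 v2 = 0 ->
  let line := fun t => zermelo (w1 + t * v1) (w2 + t * v2) in
  locally 0 (fun t => ex_derive line t) /\
  exists k, 0 < k /\ is_derive (Derive line) 0 k.
Proof.
  intros nz h1 nzv tang line.
  destruct (nonzero_near_line w1 w2 v1 v2 nz) as [d hd].
  assert (dline : forall t, ball 0 d t ->
            is_derive line t (zermelo_d (w1 + t * v1) (w2 + t * v2) v1 v2)).
  { intros t ht. apply is_derive_zermelo_along, hd.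
    change (Rabs (t - 0) < d) in ht. rewrite Rminus_0_r in ht. exact ht. }
  split; [exists d; intros t ht; eexists; exact (dline t ht)|].
  pose proof (zermelo_shift_nonzero w1 w2 nz) as unz.
  pose proof (cross_slope_d_wind_ge fr weak _ _ unz). pose proof (wind_rate_gt0 fr weak).
  destruct (zermelo_spec w1 w2 nz) as [_ e0].
  assert (Fu : cross_slope fr (w1 - zermelo w1 w2 * wind_x fr)
                              (w2 - zermelo w1 w2 * wind_y fr) = 1)
    by (unfold wind_gap in e0; lra).
  pose proof (cross_slope_d2_tangent_gt0 fr weak _ _ v1 v2 unz nzv Fu
                (cross_slope_d_of_zermelo_d_0 w1 w2 v1 v2 nz tang)).
  pose proof (is_derive_zermelo_d_tangent w1 w2 v1 v2 nz tang) as dk. cbv zeta in dk.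
  assert (Dline : locally 0
            (fun t => zermelo_d (w1 + t * v1) (w2 + t * v2) v1 v2 = Derive line t)).
  { exists d. intros t ht. symmetry. apply is_derive_unique, dline, ht. }
  eexists. split; [|exact (is_derive_ext_loc _ _ _ _ Dline dk)].
  apply Rdiv_lt_0_compat; lra.
Qed.

Lemma zermelo_strongly_convex :
  strongly_convex_indicatrix (fun w => zermelo (fst w) (snd w)).
Proof.
  intros [w1 w2] nz h1. cbn [fst snd] in *.
  set (a := zermelo_d w1 w2 1 0). set (b := zermelo_d w1 w2 0 1).
  assert (euler : w1 * a + w2 * b = 1).
  { pose proof (zermelo_d_linear w1 w2 w1 w2 1 0 0 1) as L.
    rewrite !Rmult_1_r, !Rmult_0_r, Rplus_0_r, Rplus_0_l, zermelo_d_euler, h1 in L by exact nz.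
    fold a b in L. lra. }
  assert (tang : zermelo_d w1 w2 (- b) a = 0).
  { replace (- b) with (- b * 1 + a * 0) by ring. replace a with (- b * 0 + a * 1) at 2 by ring.
    rewrite zermelo_d_linear. fold a b. ring. }
  assert (nzv : (- b, a) <> (0, 0)).
  { intros e. injection e as e1 e2. rewrite e2, <- (Ropp_involutive b), e1 in euler. lra. }
  exists a, b. split; [|split].
  - intros e. injection e as e1 e2. rewrite e1, e2 in euler. lra.
  - exact (zermelo_differentiable w1 w2 nz).
  - assert (E : (fun t => zermelo (w1 - t * b) (w2 + t * a)) =
                (fun t => zermelo (w1 + t * - b) (w2 + t * a))).
    { apply functional_extensionality. intros t. f_equal. ring. }
    cbv zeta. cbn [fst snd]. rewrite E.
    exact (zermelo_tangent_line_convex w1 w2 (- b) a nz h1 nzv tang).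
Qed.

End Zermelo.

(** * The Gaussian bell *)

Lemma fx_eq p : fx p = -3 * fst p * exp (- (fst p ^ 2 + snd p ^ 2)).
Proof.
  unfold fx, fG. apply is_derive_unique. auto_derive; auto.
  replace (fst p * (fst p * 1) + snd p * (snd p * 1)) with (fst p ^ 2 + snd p ^ 2) by ring.
  field.
Qed.

Lemma fy_eq p : fy p = -3 * snd p * exp (- (fst p ^ 2 + snd p ^ 2)).
Proof.
  unfold fy, fG. apply is_derive_unique. auto_derive; auto.
  replace (fst p * (fst p * 1) + snd p * (snd p * 1)) with (fst p ^ 2 + snd p ^ 2) by ring.
  field.
Qed.

Lemma qG_eq p : qG p = 9 * (fst p ^ 2 + snd p ^ 2) * exp (- (fst p ^ 2 + snd p ^ 2)) ^ 2.
Proof. unfold qG. rewrite fx_eq, fy_eq. ring. Qed.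

Lemma qG_ge0 p : 0 <= qG p.
Proof. unfold qG. pose proof (pow2_ge_0 (fx p)). pose proof (pow2_ge_0 (fy p)). lra. Qed.

(* 9 z e^(-2z) is maximal at z = 1/2, by e^(2z - 1) >= 2z. *)
Lemma qG_le p : qG p <= 9 / (2 * exp 1).
Proof.
  rewrite qG_eq. set (z := fst p ^ 2 + snd p ^ 2).
  assert (E : exp (- z) ^ 2 * exp (2 * z) = 1).
  { simpl. rewrite Rmult_1_r, <- !exp_plus. replace (- z + - z + 2 * z) with 0 by ring.
    apply exp_0. }
  assert (E2 : exp (2 * z) = exp (2 * z - 1) * exp 1) by (rewrite <- exp_plus; f_equal; ring).
  pose proof (exp_ineq1_le (2 * z - 1)).
  pose proof (exp_pos 1). pose proof (exp_pos (2 * z)).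
  apply (Rmult_le_reg_r (2 * exp 1 * exp (2 * z))); [nra|].
  replace (9 / (2 * exp 1) * (2 * exp 1 * exp (2 * z))) with (9 * exp (2 * z)) by (field; lra).
  replace (9 * z * exp (- z) ^ 2 * (2 * exp 1 * exp (2 * z)))
    with (18 * z * exp 1 * (exp (- z) ^ 2 * exp (2 * z))) by ring.
  rewrite E, E2. nra.
Qed.

Lemma exp_half_sq : exp (- (sqrt (1 / 2) ^ 2 + 0 ^ 2)) ^ 2 = / exp 1.
Proof.
  rewrite pow2_sqrt by lra. replace (- (1 / 2 + 0 ^ 2)) with (- (1 / 2)) by ring.
  simpl. rewrite Rmult_1_r, <- exp_plus, <- exp_Ropp. f_equal. field.
Qed.

Lemma qG_half : qG (sqrt (1 / 2), 0) = 9 / (2 * exp 1).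
Proof.
  rewrite qG_eq. cbn [fst snd]. rewrite exp_half_sq, pow2_sqrt by lra.
  pose proof (exp_pos 1). field. lra.
Qed.

Definition frame_at gbar eta p :=
  WindFrame (fx p) (fy p) (fst (Gwind gbar p)) (snd (Gwind gbar p)) eta.

Lemma Fcs_frame_at gbar eta p u : gbar <> 0 ->
  Fcs gbar eta p u = cross_slope (frame_at gbar eta p) (fst u) (snd u).
Proof.
  intros hg. destruct u as [u1 u2].
  unfold Fcs, alpha, beta, cross_slope, frame_at, hwind, hsq, hdot, hmet.
  cbn [fst snd slope_x slope_y wind_x wind_y slip].
  rewrite pow2_sqrt.
  - f_equal. field. exact hg.
  - pose proof (hsq_ge0 (frame_at gbar eta p) u1 u2) as h.
    unfold hsq, hdot, frame_at in h. exact h.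
Qed.

Lemma wind_sq_frame_at gbar eta p : 0 < gbar ->
  wind_sq (frame_at gbar eta p) = gbar ^ 2 * qG p / (qG p + 1).
Proof.
  intros hg. pose proof (qG_ge0 p).
  unfold wind_sq, hsq, hdot, frame_at, Gwind, qG in *. simpl. field. lra.
Qed.

Lemma wind_sq_frame_at_le gbar eta p : 0 < gbar ->
  wind_sq (frame_at gbar eta p) <= 9 * gbar ^ 2 / (2 * exp 1 + 9).
Proof.
  intros hg. rewrite wind_sq_frame_at by exact hg.
  pose proof (qG_le p) as hq. pose proof (qG_ge0 p). pose proof (exp_pos 1).
  assert (hq' : qG p * (2 * exp 1) <= 9).
  { apply (Rmult_le_compat_r (2 * exp 1)) in hq; [|lra]. field_simplify in hq; lra. }
  apply (Rmult_le_reg_r ((qG p + 1) * (2 * exp 1 + 9))); [nra|].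
  field_simplify; [|lra|lra]. pose proof (pow2_ge_0 gbar). nra.
Qed.

Lemma delta2_spec gbar eta : 0 < gbar -> 0 <= eta <= 1 ->
  gbar < delta2 eta <->
  9 * gbar ^ 2 * (1 - eta) ^ 2 < 2 * exp 1 + 9 /\ 36 * eta ^ 2 * gbar ^ 2 < 2 * exp 1 + 9.
Proof.
  intros hg he. pose proof (exp_pos 1).
  set (s := sqrt (2 * exp 1 + 9)).
  assert (ss : s ^ 2 = 2 * exp 1 + 9) by (apply pow2_sqrt; lra).
  assert (sp : 0 < s) by (apply sqrt_lt_R0; lra).
  rewrite <- ss.
  unfold delta2. fold s.
  assert (g2 : 0 < gbar ^ 2) by (apply pow_lt; lra).
  destruct (Rle_dec eta (1 / 3)) as [h3|h3]; rewrite <- Rlt_div_r by lra.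
  - assert (4 * eta ^ 2 <= (1 - eta) ^ 2) by nra.
    assert (0 <= gbar * (3 * (1 - eta))) by nra.
    split; [intros h; split | intros [h1 h2]]; nra.
  - assert ((1 - eta) ^ 2 < 4 * eta ^ 2) by nra.
    assert (0 <= gbar * (6 * eta)) by nra.
    split; [intros h; split | intros [h1 h2]]; nra.
Qed.

Lemma Fcs_shiftw_eq_iff gbar eta p w t : gbar <> 0 ->
  Fcs gbar eta p (shiftw gbar p w t) = t <->
  wind_gap (frame_at gbar eta p) (fst w) (snd w) t = 0.
Proof. intros hg. rewrite Fcs_frame_at by exact hg. unfold wind_gap. simpl. lra. Qed.

Lemma slippery_cross_slope_root gbar eta Ft p w : gbar <> 0 ->
  is_slippery_cross_slope gbar eta Ft -> w <> (0, 0) ->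
  0 < Ft p w /\ wind_gap (frame_at gbar eta p) (fst w) (snd w) (Ft p w) = 0 /\
  (forall t, 0 < t -> wind_gap (frame_at gbar eta p) (fst w) (snd w) t = 0 -> t = Ft p w).
Proof.
  intros hg hs nz. destruct (proj2 (hs p w) nz) as [pos [e u]].
  split; [exact pos | split].
  - apply Fcs_shiftw_eq_iff; assumption.
  - intros t ht et. apply u; [exact ht | apply (Fcs_shiftw_eq_iff _ _ _ _ _ hg), et].
Qed.

Lemma weak_wind_frame_at gbar eta p : 0 < gbar -> 0 <= eta <= 1 ->
  9 * gbar ^ 2 * (1 - eta) ^ 2 < 2 * exp 1 + 9 -> 36 * eta ^ 2 * gbar ^ 2 < 2 * exp 1 + 9 ->
  weak_wind (frame_at gbar eta p).
Proof.
  intros hg he h1 h2.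
  pose proof (wind_sq_frame_at_le gbar eta p hg) as hb.
  pose proof (wind_sq_ge0 (frame_at gbar eta p)).
  set (G := wind_sq (frame_at gbar eta p)) in *.
  pose proof (exp_pos 1).
  assert (B : G * (2 * exp 1 + 9) <= 9 * gbar ^ 2).
  { apply (Rmult_le_compat_r (2 * exp 1 + 9)) in hb; [|lra]. field_simplify in hb; lra. }
  split; [exact he | split]; cbn [slip frame_at]; fold G;
    apply (Rmult_lt_reg_r (2 * exp 1 + 9)); try lra.
  - assert (eta ^ 2 * (G * (2 * exp 1 + 9)) <= eta ^ 2 * (9 * gbar ^ 2))
      by (apply Rmult_le_compat_l; [apply pow2_ge_0 | exact B]).
    nra.
  - assert ((1 - eta) ^ 2 * (G * (2 * exp 1 + 9)) <= (1 - eta) ^ 2 * (9 * gbar ^ 2))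
      by (apply Rmult_le_compat_l; [apply pow2_ge_0 | exact B]).
    nra.
Qed.

Lemma zermelo_slippery_cross_slope gbar eta : gbar <> 0 ->
  (forall p, weak_wind (frame_at gbar eta p)) ->
  is_slippery_cross_slope gbar eta (fun p w => zermelo (frame_at gbar eta p) (fst w) (snd w)).
Proof.
  intros hg weak p [w1 w2]. cbn [fst snd]. split.
  - intros e. injection e as -> ->. apply zermelo_0.
  - intros nz. destruct (zermelo_spec _ (weak p) w1 w2 nz) as [pos e].
    split; [exact pos | split].
    + apply (Fcs_shiftw_eq_iff _ _ _ _ _ hg), e.
    + intros t ht et. apply (zermelo_unique _ (weak p) _ _ _ nz).
      apply (Fcs_shiftw_eq_iff _ _ _ (w1, w2) _ hg), et.
Qed.

(** * Strong wind and degenerate convexity *)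

(* F(-(1 + t) G) = (1 + t) sqrt h(G,G) / (1 + eta sqrt h(G,G)) > t
   when (1 - eta) sqrt h(G,G) >= 1. *)
Lemma wind_gap_against_strong_wind fr t :
  0 <= slip fr <= 1 -> 0 < wind_sq fr -> 1 <= (1 - slip fr) ^ 2 * wind_sq fr -> 0 < t ->
  wind_gap fr (- wind_x fr) (- wind_y fr) t <> 0.
Proof.
  intros he hG hw ht e. unfold wind_gap, cross_slope in e.
  set (G := wind_sq fr) in *. set (g := sqrt G).
  assert (gs : g * g = G) by (apply sqrt_sqrt; lra).
  assert (gp : 0 < g) by (apply sqrt_lt_R0; lra).
  assert (0 <= slip fr * g) by (apply Rmult_le_pos; lra).
  assert (EH : hsq fr (- wind_x fr - t * wind_x fr) (- wind_y fr - t * wind_y fr)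
                = ((1 + t) * g) * ((1 + t) * g)).
  { replace (((1 + t) * g) * ((1 + t) * g)) with ((1 + t) * (1 + t) * (g * g)) by ring.
    rewrite gs. unfold G, wind_sq, hsq, hdot. ring. }
  rewrite EH in e.
  replace (hwind fr (- wind_x fr - t * wind_x fr) (- wind_y fr - t * wind_y fr))
    with (- (1 + t) * (g * g)) in e by (rewrite gs; unfold G, wind_sq, hwind, hsq, hdot; ring).
  rewrite sqrt_square in e by nra.
  assert (0 < (1 + t) * g * (1 + slip fr * g))
    by (apply Rmult_lt_0_compat; [apply Rmult_lt_0_compat|]; lra).
  replace ((1 + t) * g * ((1 + t) * g) / ((1 + t) * g - slip fr * (- (1 + t) * (g * g))))
    with ((1 + t) * g / (1 + slip fr * g)) in e
    by (field; split; [lra | nra]).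
  assert (e2 : (1 + t) * g = t * (1 + slip fr * g)).
  { replace ((1 + t) * g) with ((1 + t) * g / (1 + slip fr * g) * (1 + slip fr * g)) at 1
      by (field; lra).
    f_equal. lra. }
  assert (1 <= (1 - slip fr) * g).
  { assert (0 <= (1 - slip fr) * g) by (apply Rmult_le_pos; lra).
    rewrite <- gs in hw. simpl in hw. nra. }
  nra.
Qed.

Lemma not_slippery_cross_slope_strong_wind gbar eta Ft : 0 < gbar -> 0 <= eta <= 1 ->
  2 * exp 1 + 9 <= 9 * gbar ^ 2 * (1 - eta) ^ 2 -> ~ is_slippery_cross_slope gbar eta Ft.
Proof.
  intros hg he hd hs.
  set (p := (sqrt (1 / 2), 0)). set (fr := frame_at gbar eta p).
  pose proof (exp_pos 1).
  assert (hG : wind_sq fr = 9 * gbar ^ 2 / (2 * exp 1 + 9)).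
  { unfold fr. rewrite wind_sq_frame_at by lra. unfold p. rewrite qG_half. field. lra. }
  assert (GP : 0 < wind_sq fr) by (rewrite hG; apply Rdiv_lt_0_compat; nra).
  assert (W : 1 <= (1 - slip fr) ^ 2 * wind_sq fr).
  { rewrite hG. cbn [fr frame_at slip].
    apply (Rmult_le_reg_r (2 * exp 1 + 9)); [lra|]. field_simplify; lra. }
  set (w := (- wind_x fr, - wind_y fr)).
  assert (wnz : w <> (0, 0)).
  { intros e.
    assert (e1 : wind_x fr = 0) by (pose proof (f_equal fst e); simpl in *; lra).
    assert (e2 : wind_y fr = 0) by (pose proof (f_equal snd e); simpl in *; lra).
    unfold wind_sq, hsq, hdot in GP. rewrite e1, e2 in GP. lra. }
  destruct (slippery_cross_slope_root gbar eta Ft p w ltac:(lra) hs wnz) as [tp [te _]].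
  exact (wind_gap_against_strong_wind fr (Ft p w) he GP W tp te).
Qed.

Lemma sqrt_sq_add_ge C X : 0 < C -> 0 <= X <= 8 * C ^ 2 ->
  C + X / (2 * C) - X ^ 2 / (8 * C ^ 3) <= sqrt (C ^ 2 + X).
Proof.
  intros hC hX. set (m := C + X / (2 * C) - X ^ 2 / (8 * C ^ 3)).
  destruct (Rle_dec m 0) as [hm|hm]; [pose proof (sqrt_pos (C ^ 2 + X)); lra|].
  rewrite <- (sqrt_pow2 m) by lra. apply sqrt_le_1_alt.
  assert (E : C ^ 2 + X - m ^ 2 = X ^ 3 / (64 * C ^ 6) * (8 * C ^ 2 - X))
    by (unfold m; field; lra).
  assert (0 <= X ^ 3 / (64 * C ^ 6) * (8 * C ^ 2 - X)).
  { apply Rmult_le_pos; [|lra].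
    apply Rdiv_le_0_compat; [apply pow_le; lra|].
    apply Rmult_lt_0_compat; [lra | apply pow_lt; lra]. }
  lra.
Qed.

Lemma degenerate_ineq eta X : 1 / 3 < eta <= 1 -> 0 <= X <= 1 / 25 ->
  let d := 64 * X ^ 2 in let S := 1 + d in let C := 1 / 2 - d / (2 * eta) in
  C ^ 2 + X + S * C / 2 <= S * sqrt (C ^ 2 + X).
Proof.
  intros he hX d S C.
  assert (d0 : 0 <= d <= 64 / 625) by (unfold d; nra).
  assert (e0 : d / 2 <= d / (2 * eta) <= 3 / 2 * d).
  { split; apply (Rmult_le_reg_r (2 * eta)); try lra; field_simplify; nra. }
  assert (C1 : 1 / 4 <= C <= 1 / 2) by (unfold C; lra).
  assert (S1 : 1 <= S) by (unfold S; lra).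
  pose proof (sqrt_sq_add_ge C X ltac:(lra) ltac:(nra)) as sq.
  eapply Rle_trans; [|apply Rmult_le_compat_l; [lra | exact sq]].
  assert (A : X <= S * X / (2 * C)).
  { apply (Rmult_le_reg_r (2 * C)); [lra|]. field_simplify; nra. }
  assert (C4 : 1 / 256 <= C ^ 4) by (replace (1 / 256) with ((1 / 4) ^ 4) by field;
                                      apply pow_incr; lra).
  assert (B : S * X ^ 2 <= 8 * C ^ 4 * (d / (2 * eta) + d / 2)).
  { assert (X ^ 2 * (1 / 256) <= X ^ 2 * C ^ 4)
      by (apply Rmult_le_compat_l; [apply pow2_ge_0 | lra]).
    assert (8 * C ^ 4 * d <= 8 * C ^ 4 * (d / (2 * eta) + d / 2))
      by (apply Rmult_le_compat_l; [nra | lra]).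
    unfold S, d in *. nra. }
  replace (S * (C + X / (2 * C) - X ^ 2 / (8 * C ^ 3)))
    with (S * C + S * X / (2 * C) - (S * X ^ 2) / (8 * C ^ 3)) by (field; lra).
  assert (B' : S * X ^ 2 / (8 * C ^ 3) <= C * (d / (2 * eta) + d / 2)).
  { apply (Rmult_le_reg_r (8 * C ^ 3)); [apply Rmult_lt_0_compat; [lra | apply pow_lt; lra]|].
    replace (S * X ^ 2 / (8 * C ^ 3) * (8 * C ^ 3)) with (S * X ^ 2) by (field; lra).
    replace (C * (d / (2 * eta) + d / 2) * (8 * C ^ 3))
      with (8 * C ^ 4 * (d / (2 * eta) + d / 2)) by ring.
    exact B. }
  replace (C ^ 2 + X + S * C / 2) with (S * C - C * (d / (2 * eta) + d / 2) + X)
    by (unfold S, C; field; lra).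
  lra.
Qed.

Lemma qG_axis_continuous r : continuity_pt (fun r => qG (r, 0)) r.
Proof.
  apply (continuity_pt_ext (fun r => 9 * (r ^ 2 + 0 ^ 2) * exp (- (r ^ 2 + 0 ^ 2)) ^ 2)).
  - intros x. symmetry. apply qG_eq.
  - eapply continuity_pt_of_is_derive, Derive_correct. auto_derive. auto.
Qed.

Lemma qG_axis_onto q : 0 <= q <= 9 / (2 * exp 1) -> exists r, qG (r, 0) = q.
Proof.
  intros hq.
  assert (q0 : qG (0, 0) = 0) by (rewrite qG_eq; cbn [fst snd]; ring).
  pose proof (sqrt_pos (1 / 2)).
  destruct (IVT_gen (fun r => qG (r, 0)) 0 (sqrt (1 / 2)) q) as [r [_ er]].
  - intros x. apply qG_axis_continuous.
  - rewrite q0, qG_half, Rmin_left, Rmax_right; lra.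
  - exists r. exact er.
Qed.

Section Degenerate.
Variable fr : wind_frame.
Hypothesis slope_y0 : slope_y fr = 0.
Hypothesis wind_y0 : wind_y fr = 0.
Hypothesis slip_range : 1 / 3 < slip fr <= 1.
Hypothesis convexity_limit : 4 * slip fr ^ 2 * wind_sq fr = 1.

Let g1 := wind_x fr.
Let x1 := (1 + slip fr) * g1.

Lemma wind_sq_axis : wind_sq fr = (1 + slope_x fr ^ 2) * g1 ^ 2.
Proof. unfold wind_sq, hsq, hdot, g1. rewrite slope_y0, wind_y0. ring. Qed.

Lemma wind_x_nonzero : g1 <> 0.
Proof.
  intros e. pose proof wind_sq_axis as E. rewrite e in E.
  replace ((1 + slope_x fr ^ 2) * 0 ^ 2) with 0 in E by ring.
  pose proof convexity_limit as L. rewrite E in L. lra.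
Qed.

Lemma axis_point_nonzero t : (x1, t) <> (0, 0).
Proof.
  intros e. injection e as e _. revert e.
  apply Rmult_integral_contrapositive_currified; [lra | exact wind_x_nonzero].
Qed.

Lemma wind_gap_flip w1 w2 s : wind_gap fr w1 (- w2) s = wind_gap fr w1 w2 s.
Proof.
  unfold wind_gap, cross_slope, hwind, hsq, hdot. rewrite slope_y0, wind_y0.
  f_equal. f_equal; [ring | f_equal; [f_equal; ring | ring]].
Qed.

Lemma wind_gap_axis_1 : wind_gap fr x1 0 1 = 0.
Proof.
  pose proof convexity_limit.
  assert (Hq : hsq fr (x1 - 1 * g1) (0 - 1 * 0) = / 2 * / 2).
  { unfold hsq, hdot. rewrite slope_y0.
    transitivity (slip fr ^ 2 * ((1 + slope_x fr ^ 2) * g1 ^ 2)); [unfold x1; ring|].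
    rewrite <- wind_sq_axis. lra. }
  assert (K : slip fr * hwind fr (x1 - 1 * g1) (0 - 1 * 0) = / 2 * / 2).
  { unfold hwind, hdot. rewrite slope_y0, wind_y0. change (wind_x fr) with g1.
    transitivity (slip fr ^ 2 * ((1 + slope_x fr ^ 2) * g1 ^ 2)); [unfold x1; ring|].
    rewrite <- wind_sq_axis. lra. }
  unfold wind_gap, cross_slope. change (wind_x fr) with g1. rewrite wind_y0, Hq, K.
  rewrite sqrt_square by lra. field.
Qed.

Lemma wind_sq_degenerate : wind_sq fr = 1 / (4 * slip fr ^ 2).
Proof. rewrite <- convexity_limit. field. lra. Qed.

(* (x1, T) - S G has h-norm^2 C^2 + T^2 and slip * hwind = C / 2, so
   degenerate_ineq says F((x1, T) - S G) <= S. *)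
Lemma wind_gap_axis_le T : T <> 0 -> T ^ 2 <= 1 / 25 ->
  wind_gap fr x1 T (1 + 64 * (T ^ 2) ^ 2) <= 0.
Proof.
  intros hT hT2.
  pose proof (degenerate_ineq (slip fr) (T ^ 2) slip_range
                ltac:(split; [apply pow2_ge_0 | exact hT2])) as ineq.
  cbv zeta in ineq.
  set (S := 1 + 64 * (T ^ 2) ^ 2) in *.
  set (C := 1 / 2 - 64 * (T ^ 2) ^ 2 / (2 * slip fr)) in *.
  unfold wind_gap. change (wind_x fr) with g1. rewrite wind_y0.
  apply Rle_minus, cross_slope_le; [lra | intros e; injection e as _ e; lra |].
  assert (H : hsq fr (x1 - S * g1) (T - S * 0) = C ^ 2 + T ^ 2).
  { unfold hsq, hdot. rewrite slope_y0.
    transitivity ((1 + slip fr - S) ^ 2 * ((1 + slope_x fr ^ 2) * g1 ^ 2) + T ^ 2);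
      [unfold x1; ring|].
    rewrite <- wind_sq_axis, wind_sq_degenerate. unfold C, S. field. lra. }
  assert (K : slip fr * hwind fr (x1 - S * g1) (T - S * 0) = C / 2).
  { unfold hwind, hdot. rewrite slope_y0, wind_y0. change (wind_x fr) with g1.
    transitivity (slip fr * (1 + slip fr - S) * ((1 + slope_x fr ^ 2) * g1 ^ 2));
      [unfold x1; ring|].
    rewrite <- wind_sq_axis, wind_sq_degenerate. unfold C, S. field. lra. }
  rewrite H, K. lra.
Qed.

Variable N : R * R -> R.
Hypothesis N_solves : forall w, w <> (0, 0) ->
  0 < N w /\ wind_gap fr (fst w) (snd w) (N w) = 0 /\
  (forall t, 0 < t -> wind_gap fr (fst w) (snd w) t = 0 -> t = N w).

Let convex : 4 * slip fr ^ 2 * wind_sq fr <= 1 := Req_le _ _ convexity_limit.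

Lemma N_axis : N (x1, 0) = 1.
Proof.
  symmetry. apply (N_solves _ (axis_point_nonzero 0)); [lra | exact wind_gap_axis_1].
Qed.

Lemma N_flip w1 w2 : (w1, w2) <> (0, 0) -> N (w1, - w2) = N (w1, w2).
Proof.
  intros nz.
  assert (nz' : (w1, - w2) <> (0, 0)).
  { intros e. apply nz. injection e as -> e. f_equal. lra. }
  destruct (N_solves _ nz') as [pos [e _]]. cbn [fst snd] in e.
  apply (N_solves _ nz); [exact pos|]. cbn [fst snd]. rewrite <- wind_gap_flip. exact e.
Qed.

Lemma N_axis_le T : T <> 0 -> T ^ 2 <= 1 / 25 -> N (x1, T) <= 1 + 64 * (T ^ 2) ^ 2.
Proof.
  intros hT hT2.
  pose proof (axis_point_nonzero T) as nz.
  set (S := 1 + 64 * (T ^ 2) ^ 2).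
  assert (S1 : 1 <= S) by (unfold S; pose proof (pow2_ge_0 (T ^ 2)); lra).
  pose proof (wind_gap_axis_le T hT hT2) as gS. fold S in gS.
  pose proof (cross_slope_gt0 fr convex x1 T nz) as g0. rewrite <- wind_gap_0 in g0.
  destruct (IVT_gen (wind_gap fr x1 T) 0 S 0) as [s0 [hs0 es0]].
  - intros z. apply (wind_gap_continuous fr convex).
  - rewrite Rmin_right, Rmax_left; lra.
  - rewrite Rmin_left, Rmax_right in hs0 by lra.
    assert (0 < s0) by (destruct (Req_dec s0 0) as [->|]; lra).
    rewrite <- (proj2 (proj2 (N_solves _ nz)) s0); [lra | assumption | exact es0].
Qed.

Lemma N_axis_even t : N (x1, - t) = N (x1, t).
Proof. apply N_flip, axis_point_nonzero. Qed.

(* N is even in the second variable and 1 + O(T^4) along the vertical line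
   through (x1, 0), so its indicatrix has zero curvature there. *)
Lemma not_strongly_convex_degenerate : ~ strongly_convex_indicatrix N.
Proof.
  intros hc.
  destruct (hc (x1, 0) (axis_point_nonzero 0) N_axis) as [a [b [abnz [diff [hl [k [hk hdk]]]]]]].
  cbn [fst snd] in diff, hl, hdk.
  assert (b0 : b = 0).
  { pose proof (derivable_pt_lim_comp_2d (fun u v => N (u, v)) (fun _ => x1) (fun t => t)
                  0 a b 0 1 diff (derivable_pt_lim_const x1 0) (derivable_pt_lim_id 0)) as D.
    apply is_derive_Reals in D. cbv beta in D.
    replace b with (a * 0 + b * 1) by ring.
    exact (is_derive_even_0 (fun t => N (x1, t)) _ N_axis_even D). }
  subst b.
  set (L := fun t => N (x1 - t * 0, 0 + t * a)) in *.
  assert (LE : forall t, L t = N (x1, t * a))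
    by (intros t; unfold L; f_equal; f_equal; ring).
  assert (DL0 : Derive L 0 = 0).
  { destruct (proj1 (locally_Rabs _ _) hl) as [rho hrho].
    apply (is_derive_even_0 L).
    - intros t. rewrite !LE. replace (- t * a) with (- (t * a)) by ring. apply N_axis_even.
    - apply Derive_correct, hrho. rewrite Rminus_0_r, Rabs_R0. apply cond_pos. }
  apply (quartic_bound_contradicts_growth L k (64 * a ^ 4) hl DL0 hk hdk).
  assert (hq : 0 < 1 / (5 * (Rabs a + 1)))
    by (pose proof (Rabs_pos a); apply Rdiv_lt_0_compat; lra).
  apply locally_Rabs. exists (mkposreal _ hq). intros t ht. cbn [pos] in ht.
  rewrite Rminus_0_r in ht.
  rewrite !LE, Rmult_0_l, N_axis.
  destruct (Req_dec (t * a) 0) as [ta|ta]; [rewrite ta, N_axis; pose proof (pow_le t 4); nra|].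
  replace (64 * a ^ 4 * t ^ 4) with (64 * ((t * a) ^ 2) ^ 2) by ring.
  apply N_axis_le; [exact ta|].
  assert (Rabs (t * a) <= 1 / 5).
  { rewrite Rabs_mult. pose proof (Rabs_pos a). pose proof (Rabs_pos t).
    apply (Rmult_lt_compat_r (5 * (Rabs a + 1))) in ht; [|lra].
    field_simplify in ht; [|lra]. nra. }
  rewrite <- Rsqr_pow2, Rsqr_abs, Rsqr_pow2. pose proof (Rabs_pos (t * a)). nra.
Qed.

End Degenerate.

Lemma degenerate_point gbar eta : 0 < gbar -> 0 < eta ->
  2 * exp 1 + 9 <= 36 * eta ^ 2 * gbar ^ 2 ->
  exists r, wind_sq (frame_at gbar eta (r, 0)) = 1 / (4 * eta ^ 2).
Proof.
  intros hg he hd. pose proof (exp_pos 1).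
  set (B := 4 * eta ^ 2 * gbar ^ 2 - 1).
  assert (Bp : 0 < B) by (unfold B; lra).
  destruct (qG_axis_onto (1 / B)) as [r hr].
  { split; [apply Rlt_le, Rdiv_lt_0_compat; lra|].
    apply (Rmult_le_reg_r (B * (2 * exp 1))); [nra|]. field_simplify; [|lra..]. unfold B. lra. }
  exists r. rewrite wind_sq_frame_at, hr by exact hg. unfold B in *. field. nra.
Qed.

Lemma not_convex_slippery_cross_slope_degenerate gbar eta Ft :
  0 < gbar -> 1 / 3 < eta <= 1 -> 2 * exp 1 + 9 <= 36 * eta ^ 2 * gbar ^ 2 ->
  is_slippery_cross_slope gbar eta Ft -> ~ forall p, strongly_convex_indicatrix (Ft p).
Proof.
  intros hg he hd hs hc.
  destruct (degenerate_point gbar eta hg ltac:(lra) hd) as [r hr].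
  set (p := (r, 0)) in *.
  assert (fy0 : fy p = 0) by (rewrite fy_eq; unfold p; cbn [snd]; ring).
  apply (not_strongly_convex_degenerate (frame_at gbar eta p)) with (N := Ft p).
  - exact fy0.
  - cbn [frame_at wind_y Gwind snd]. rewrite fy0. ring.
  - exact he.
  - rewrite hr. cbn [frame_at slip]. field. lra.
  - intros w nz. apply slippery_cross_slope_root; [lra | exact hs | exact nz].
  - apply hc.
Qed.

Theorem lemma5p1 (gbar eta : R) (hg : 0 < gbar) (heta : 0 <= eta <= 1) :
  (exists Ft : R * R -> R * R -> R,
     is_slippery_cross_slope gbar eta Ft /\
     forall p : R * R, strongly_convex_indicatrix (Ft p))
  <-> gbar < delta2 eta.
Proof.
  rewrite delta2_spec by assumption. split.
  - intros [Ft [hs hc]].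
    assert (weak : 9 * gbar ^ 2 * (1 - eta) ^ 2 < 2 * exp 1 + 9)
      by (apply Rnot_le_lt; intros h;
          exact (not_slippery_cross_slope_strong_wind _ _ _ hg heta h hs)).
    split; [exact weak|]. apply Rnot_le_lt. intros h.
    assert (h3 : 1 / 3 < eta).
    { assert ((1 - eta) ^ 2 < 4 * eta ^ 2) by (apply (Rmult_lt_reg_l (9 * gbar ^ 2)); nra).
      nra. }
    exact (not_convex_slippery_cross_slope_degenerate gbar eta Ft hg
             (conj h3 (proj2 heta)) h hs hc).
  - intros [h1 h2].
    pose proof (fun p => weak_wind_frame_at gbar eta p hg heta h1 h2) as weak.
    exists (fun p w => zermelo (frame_at gbar eta p) (fst w) (snd w)). split.
    + apply zermelo_slippery_cross_slope; [lra | exact weak].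
    + intros p. apply zermelo_strongly_convex, weak.
Qed.
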